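(* Let $\mathcal P=(P_n)_{n\ge1}$ be a filtration on a Hilbert space $H$. Let $\mathcal J$ be the smallest closed subalgebra of $\mathcal F^{\mathcal P}$ containing all sequences $(P_nKP_n)_{n\ge1}$ with $K$ a compact operator on $H$. Then $\mathcal G^{\mathcal P}\subseteq\mathcal J$ if and only if $\mathcal P$ is injective, i.e. $P_n\ne P_m$ whenever $n\ne m$.
   Context: A filtration on a Hilbert space $H$ is a sequence $(P_n)$ of finite-rank orthogonal projections on $H$ converging strongly to the identity. $\mathcal F^{\mathcal P}$ is the set of all sequences $(A_n)$ of operators $A_n:\operatorname{im}P_n\to\operatorname{im}P_n$ such that $(A_nP_n)$ converges $^*$-strongly (i.e. $A_nP_n$ and $(A_nP_n)^*$ converge strongly) on $H$; with entrywise operations and the norm $\sup_n\|A_n\|$ it is a $C^*$-algebra. $\mathcal G^{\mathcal P}$ is the closed ideal of $\mathcal F^{\mathcal P}$ consisting of sequences with $\|A_n\|\to0$. *)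

From Stdlib Require Import Reals List.
Open Scope R_scope.
Set Implicit Arguments.

Definition C : Type := (R * R)%type.
Definition C0 : C := (0, 0).
Definition C1 : C := (1, 0).
Definition Cadd (z w : C) : C := (fst z + fst w, snd z + snd w).
Definition Cmul (z w : C) : C :=
  (fst z * fst w - snd z * snd w, fst z * snd w + snd z * fst w).
Definition Cconj (z : C) : C := (fst z, - snd z).

Record Hilbert := {
  hcar :> Type;
  hzero : hcar;
  hadd : hcar -> hcar -> hcar;
  hopp : hcar -> hcar;
  hscal : C -> hcar -> hcar;
  inner : hcar -> hcar -> C;
  hadd_assoc : forall x y z, hadd x (hadd y z) = hadd (hadd x y) z;
  hadd_comm : forall x y, hadd x y = hadd y x;
  hadd_zero : forall x, hadd x hzero = x;
  hadd_opp : forall x, hadd x (hopp x) = hzero;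
  hscal_one : forall x, hscal C1 x = x;
  hscal_mul : forall a b x, hscal a (hscal b x) = hscal (Cmul a b) x;
  hscal_addv : forall a x y, hscal a (hadd x y) = hadd (hscal a x) (hscal a y);
  hscal_adds : forall a b x, hscal (Cadd a b) x = hadd (hscal a x) (hscal b x);
  inner_add : forall x y z, inner (hadd x y) z = Cadd (inner x z) (inner y z);
  inner_scal : forall a x y, inner (hscal a x) y = Cmul a (inner x y);
  inner_sym : forall x y, inner y x = Cconj (inner x y);
  inner_pos : forall x, 0 <= fst (inner x x);
  inner_def : forall x, inner x x = C0 -> x = hzero;
  hcomplete : forall u : nat -> hcar,
    (forall eps, eps > 0 -> exists N, forall n m, (n >= N)%nat -> (m >= N)%nat ->
        sqrt (fst (inner (hadd (u n) (hopp (u m))) (hadd (u n) (hopp (u m))))) < eps) ->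
    exists l, forall eps, eps > 0 -> exists N, forall n, (n >= N)%nat ->
        sqrt (fst (inner (hadd (u n) (hopp l)) (hadd (u n) (hopp l)))) < eps
}.

Arguments hzero {h}.
Arguments hadd {h}.
Arguments hopp {h}.
Arguments hscal {h}.
Arguments inner {h}.

Section Ops.
Variable H : Hilbert.

Definition hsub (x y : H) : H := hadd x (hopp y).
Definition hnorm (x : H) : R := sqrt (fst (inner x x)).

Definition hconv (u : nat -> H) (l : H) : Prop :=
  forall eps, eps > 0 -> exists N, forall n, (n >= N)%nat -> hnorm (hsub (u n) l) < eps.

Definition op := H -> H.

Definition is_linear (T : op) : Prop :=
  (forall x y, T (hadd x y) = hadd (T x) (T y)) /\
  (forall a x, T (hscal a x) = hscal a (T x)).

Definition opnorm_le (T : op) (r : R) : Prop :=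
  forall x, hnorm (T x) <= r * hnorm x.

Definition is_adjoint (T S : op) : Prop :=
  forall x y, inner (T x) y = inner x (S y).

Definition orth_proj (P : op) : Prop :=
  is_linear P /\ (forall x, P (P x) = P x) /\ is_adjoint P P.

Fixpoint lincomb (cs : list C) (vs : list H) : H :=
  match cs, vs with
  | c :: cs', v :: vs' => hadd (hscal c v) (lincomb cs' vs')
  | _, _ => hzero
  end.

Definition finite_rank (T : op) : Prop :=
  exists vs : list H, forall x, exists cs : list C,
    length cs = length vs /\ T x = lincomb cs vs.

Definition compact (K : op) : Prop :=
  is_linear K /\
  forall u : nat -> H, (exists M, forall k, hnorm (u k) <= M) ->
    exists phi : nat -> nat, (forall k, (phi k < phi (S k))%nat) /\
      exists y, hconv (fun k => K (u (phi k))) y.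

Definition filtration (P : nat -> op) : Prop :=
  (forall n, orth_proj (P n) /\ finite_rank (P n)) /\
  (forall x, hconv (fun n => P n x) x).

Definition injective_filtration (P : nat -> op) : Prop :=
  forall n m, n <> m -> exists x, P n x <> P m x.

Definition strong_conv (T : nat -> op) : Prop :=
  forall x, exists y, hconv (fun n => T n x) y.

(** Sequences (A_n), A_n : im P_n -> im P_n, are represented by operators
    A_n on H with A_n = P_n A_n P_n (so A_n P_n is the operator on H). *)
Definition opseq := nat -> op.

Definition inF (P : nat -> op) (A : opseq) : Prop :=
  (forall n, is_linear (A n) /\ forall x, A n x = P n (A n (P n x))) /\
  strong_conv (fun n x => A n (P n x)) /\
  exists Sa : opseq, (forall n, is_adjoint (fun x => A n (P n x)) (Sa n)) /\
                     strong_conv Sa.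

Definition seq_zero : opseq := fun _ _ => hzero.
Definition seq_add (A B : opseq) : opseq := fun n x => hadd (A n x) (B n x).
Definition seq_scal (c : C) (A : opseq) : opseq := fun n x => hscal c (A n x).
Definition seq_mul (A B : opseq) : opseq := fun n x => A n (B n x).
Definition seq_sub (A B : opseq) : opseq := fun n x => hsub (A n x) (B n x).

Definition inG (P : nat -> op) (A : opseq) : Prop :=
  inF P A /\
  forall eps, eps > 0 -> exists N, forall n, (n >= N)%nat -> opnorm_le (A n) eps.

Definition closed_subalg (P : nat -> op) (S : opseq -> Prop) : Prop :=
  (forall A, S A -> inF P A) /\
  S seq_zero /\
  (forall A B, S A -> S B -> S (seq_add A B)) /\
  (forall c A, S A -> S (seq_scal c A)) /\
  (forall A B, S A -> S B -> S (seq_mul A B)) /\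
  (forall A, inF P A ->
     (forall eps, eps > 0 -> exists B, S B /\ forall n, opnorm_le (seq_sub A B n) eps) ->
     S A).

Definition inJ (P : nat -> op) (A : opseq) : Prop :=
  forall S, closed_subalg P S ->
    (forall K, compact K -> S (fun n x => P n (K (P n x)))) ->
    S A.

End Ops.

(* If [P_n0 = P_m0] with [n0 <> m0], the sequences of F^P with equal entries at [n0] and
   [m0] form a closed subalgebra containing the generators [(P_n K P_n)], so every sequence
   of J has this property; but [(delta_{n,n0} P_n)] lies in G^P and does not.
   Conversely, let P be injective. The real sequences [psi] with [(psi_n P_n K P_n)] in J for
   all rank-one [K] contain the constants and are stable under multiplication by affine
   functions of [n |-> |P_n a|^2], since [P_n (w (x) a) P_n . P_n (a (x) v) P_n] equals
   [|P_n a|^2 P_n (w (x) v) P_n]. Injectivity lets such functions separate any finitely many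
   indices from [k], and as [P_k <> I] and [|P_n a|^2 -> |a|^2] one of them decays at
   infinity; suitable products therefore approximate the indicator of [{k}] uniformly. Hence J
   contains every sequence supported at a single index (its entry has finite rank, so it is a
   sum of rank-one operators), thus every finite truncation of [A] in G^P, and these converge
   to [A] in norm. Showing that the generators belong to F^P needs adjoints of compact
   operators, which come from the Riesz representation theorem. *)

From Stdlib Require Import Reals Lra Psatz Classical ClassicalEpsilon FunctionalExtensionality List Arith.
Open Scope R_scope.

Arguments hadd_assoc {h}.
Arguments hadd_comm {h}.
Arguments hadd_zero {h}.
Arguments hadd_opp {h}.
Arguments hscal_one {h}.
Arguments hscal_mul {h}.
Arguments hscal_addv {h}.
Arguments hscal_adds {h}.
Arguments inner_add {h}.
Arguments inner_scal {h}.
Arguments inner_sym {h}.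
Arguments inner_pos {h}.
Arguments inner_def {h}.

Notation hn := (hnorm _).
Notation hs := (hsub _).

Ltac csimpl := unfold Cadd, Cmul, Cconj, C0, C1; simpl.
Ltac csimpl_in_all := unfold Cadd, Cmul, Cconj, C0, C1 in *; simpl in *.

Definition Cnorm2 (w : C) : R := fst w * fst w + snd w * snd w.

Lemma Cnorm2_nonneg w : 0 <= Cnorm2 w.
Proof. unfold Cnorm2. nra. Qed.

Lemma Cnorm2_eq0 w : Cnorm2 w = 0 -> w = C0.
Proof. destruct w as [a b]; unfold Cnorm2; simpl; intro E. unfold C0. f_equal; nra. Qed.

Lemma Cnorm2_mul a b : Cnorm2 (Cmul a b) = Cnorm2 a * Cnorm2 b.
Proof. destruct a, b; unfold Cnorm2; csimpl; ring. Qed.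

Lemma Cnorm2_real r : Cnorm2 (r, 0) = r * r.
Proof. unfold Cnorm2; simpl; ring. Qed.

Lemma Cconj_involutive c : Cconj (Cconj c) = c.
Proof. destruct c; csimpl; f_equal; ring. Qed.

Lemma sqrt_le_of_sq a b : 0 <= b -> a * a <= b * b -> a <= b.
Proof. intros. nra. Qed.

Lemma fst_le_Cmod w : fst w <= sqrt (Cnorm2 w).
Proof.
  destruct (Rle_dec (fst w) 0). { pose proof (sqrt_pos (Cnorm2 w)); lra. }
  apply sqrt_le_of_sq. apply sqrt_pos. rewrite sqrt_sqrt by apply Cnorm2_nonneg. unfold Cnorm2. nra.
Qed.

Lemma Rabs_fst_le_Cmod w : Rabs (fst w) <= sqrt (Cnorm2 w).
Proof. rewrite <- sqrt_Rsqr_abs. apply sqrt_le_1_alt. unfold Rsqr, Cnorm2. nra. Qed.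

Lemma Rabs_snd_le_Cmod w : Rabs (snd w) <= sqrt (Cnorm2 w).
Proof. rewrite <- sqrt_Rsqr_abs. apply sqrt_le_1_alt. unfold Rsqr, Cnorm2. nra. Qed.

Lemma Cmod_le_Rabs w : sqrt (Cnorm2 w) <= Rabs (fst w) + Rabs (snd w).
Proof.
  pose proof (Rabs_pos (fst w)); pose proof (Rabs_pos (snd w)).
  apply sqrt_le_of_sq. lra. rewrite sqrt_sqrt by apply Cnorm2_nonneg. unfold Cnorm2.
  assert (E1 : Rabs (fst w) * Rabs (fst w) = fst w * fst w) by (rewrite <- Rabs_mult; apply Rabs_right; nra).
  assert (E2 : Rabs (snd w) * Rabs (snd w) = snd w * snd w) by (rewrite <- Rabs_mult; apply Rabs_right; nra).
  nra.
Qed.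

Section VectorSpace.
Context {H : Hilbert}.
Implicit Types x y z w a b c d : H.

Lemma hadd_0l x : hadd hzero x = x.
Proof. rewrite hadd_comm; apply hadd_zero. Qed.

Lemma hadd_cancel_l x y z : hadd x y = hadd x z -> y = z.
Proof.
  intro E. assert (E2 : hadd (hopp x) (hadd x y) = hadd (hopp x) (hadd x z)) by (rewrite E; auto).
  rewrite !hadd_assoc, (hadd_comm (hopp x) x), hadd_opp, !hadd_0l in E2. exact E2.
Qed.

Lemma hadd_eq_l_zero x y : hadd x y = x -> y = hzero.
Proof. intro E. apply (hadd_cancel_l x). rewrite hadd_zero; exact E. Qed.

Lemma hscal_0l x : hscal C0 x = hzero.
Proof.
  apply (hadd_eq_l_zero (hscal C0 x)). rewrite <- hscal_adds. f_equal. csimpl. f_equal; ring.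
Qed.

Lemma hscal_zero_scalar (s : C) x : fst s = 0 -> snd s = 0 -> hscal s x = hzero.
Proof. destruct s; simpl; intros; subst. apply hscal_0l. Qed.

Lemma hscal_0r (s : C) : hscal s (@hzero H) = hzero.
Proof. apply (hadd_eq_l_zero (hscal s hzero)). rewrite <- hscal_addv, hadd_zero. reflexivity. Qed.

Lemma hopp_eq_scal x : hopp x = hscal (-1, 0) x.
Proof.
  apply (hadd_cancel_l x). rewrite hadd_opp.
  rewrite <- (hscal_one x) at 1. rewrite <- hscal_adds, <- (hscal_0l x). f_equal. csimpl. f_equal; ring.
Qed.

Lemma hopp_zero : hopp (@hzero H) = hzero.
Proof. rewrite hopp_eq_scal. apply hscal_0r. Qed.

Lemma hopp_add x y : hopp (hadd x y) = hadd (hopp x) (hopp y).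
Proof. rewrite !hopp_eq_scal, hscal_addv. reflexivity. Qed.

Lemma hopp_involutive x : hopp (hopp x) = x.
Proof. rewrite !hopp_eq_scal, hscal_mul. rewrite <- (hscal_one x) at 2. f_equal. csimpl. f_equal; ring. Qed.

Lemma hscal_two x : hscal (2, 0) x = hadd x x.
Proof.
  replace (2, 0) with (Cadd C1 C1) by (csimpl; f_equal; ring). rewrite hscal_adds, hscal_one. reflexivity.
Qed.

Lemma hadd_add_swap a b c d : hadd (hadd a b) (hadd c d) = hadd (hadd a c) (hadd b d).
Proof. rewrite <- !hadd_assoc. f_equal. rewrite !hadd_assoc. f_equal. apply hadd_comm. Qed.

Lemma hsub_eq0 x y : hs x y = hzero -> x = y.
Proof.
  unfold hsub. intro E. apply (hadd_cancel_l (hopp y)). rewrite (hadd_comm _ x), E, hadd_comm, hadd_opp. reflexivity.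
Qed.

Lemma hsub_same x : hs x x = hzero.
Proof. apply hadd_opp. Qed.

Lemma hsub_0r x : hs x hzero = x.
Proof. unfold hsub. rewrite hopp_zero, hadd_zero. reflexivity. Qed.

Lemma hadd_hsub x y : hadd y (hs x y) = x.
Proof. unfold hsub. rewrite hadd_comm, <- hadd_assoc, (hadd_comm (hopp y)), hadd_opp, hadd_zero. reflexivity. Qed.

Lemma hsub_add_add a b c d : hs (hadd a b) (hadd c d) = hadd (hs a c) (hs b d).
Proof. unfold hsub. rewrite hopp_add. apply hadd_add_swap. Qed.

Lemma hsub_chain a b c : hs a c = hadd (hs a b) (hs b c).
Proof.
  unfold hsub. rewrite <- hadd_assoc. f_equal. rewrite hadd_assoc, (hadd_comm _ b), hadd_opp, hadd_0l. reflexivity.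
Qed.

Lemma hsub_hsub_add a b c : hs (hs a b) c = hs a (hadd b c).
Proof. unfold hsub. rewrite hopp_add, hadd_assoc. reflexivity. Qed.

Lemma hsub_hsub_l x a b : hs (hs x a) (hs x b) = hs b a.
Proof. apply (hadd_cancel_l (hs x b)). rewrite hadd_hsub, <- hsub_chain. reflexivity. Qed.

Lemma hsub_opp_swap a b : hopp (hs a b) = hs b a.
Proof. unfold hsub. rewrite hopp_add, hopp_involutive, hadd_comm. reflexivity. Qed.

Lemma hscal_hsub (s : C) a b : hscal s (hs a b) = hs (hscal s a) (hscal s b).
Proof. unfold hsub. rewrite hscal_addv. f_equal. rewrite !hopp_eq_scal, !hscal_mul. f_equal. csimpl. f_equal; ring. Qed.

Lemma hsub_hscal_r (s t : C) w : hs (hscal s w) (hscal t w) = hscal (Cadd s (Cmul (-1,0) t)) w.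
Proof. unfold hsub. rewrite hopp_eq_scal, hscal_mul, hscal_adds. reflexivity. Qed.

End VectorSpace.

Section InnerProduct.
Context {H : Hilbert}.
Implicit Types x y z w a b : H.

Lemma inner_0l y : inner (@hzero H) y = C0.
Proof. rewrite <- (hscal_0l hzero), inner_scal. csimpl. f_equal; ring. Qed.

Lemma inner_0r x : inner x (@hzero H) = C0.
Proof. rewrite inner_sym, inner_0l. csimpl. f_equal; ring. Qed.

Lemma inner_add_r x y z : inner x (hadd y z) = Cadd (inner x y) (inner x z).
Proof.
  rewrite inner_sym, inner_add, (inner_sym x y), (inner_sym x z).
  destruct (inner y x), (inner z x). csimpl. f_equal; ring.
Qed.

Lemma inner_scal_r (s : C) x y : inner x (hscal s y) = Cmul (Cconj s) (inner x y).
Proof. rewrite inner_sym, inner_scal, (inner_sym x y). destruct s, (inner y x). csimpl. f_equal; ring. Qed.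

Lemma inner_opp_l x y : inner (hopp x) y = Cmul (-1,0) (inner x y).
Proof. rewrite hopp_eq_scal, inner_scal. reflexivity. Qed.

Lemma inner_opp_r x y : inner x (hopp y) = Cmul (-1,0) (inner x y).
Proof. rewrite hopp_eq_scal, inner_scal_r. destruct (inner x y). csimpl. f_equal; ring. Qed.

Lemma inner_sub_l x y z : inner (hs x y) z = Cadd (inner x z) (Cmul (-1,0) (inner y z)).
Proof. unfold hsub. rewrite inner_add, inner_opp_l. reflexivity. Qed.

Lemma inner_sub_r x y z : inner x (hs y z) = Cadd (inner x y) (Cmul (-1,0) (inner x z)).
Proof. unfold hsub. rewrite inner_add_r, inner_opp_r. reflexivity. Qed.

Lemma inner_ext_r w1 w2 : (forall z, inner z w1 = inner z w2) -> w1 = w2.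
Proof.
  intro E. apply hsub_eq0, inner_def. rewrite inner_sub_r, !E.
  destruct (inner (hs w1 w2) w2). csimpl. f_equal; ring.
Qed.

Lemma inner_ext_l w1 w2 : (forall z, inner w1 z = inner w2 z) -> w1 = w2.
Proof. intro E. apply inner_ext_r. intro z. rewrite (inner_sym w1), (inner_sym w2), E. reflexivity. Qed.

Definition sqnorm x : R := fst (inner x x).

Lemma inner_self x : inner x x = (sqnorm x, 0).
Proof.
  unfold sqnorm. pose proof (inner_sym x x) as E. destruct (inner x x) as [p q].
  csimpl_in_all. injection E; intros. f_equal; lra.
Qed.

Lemma sqnorm_nonneg x : 0 <= sqnorm x.
Proof. apply inner_pos. Qed.

Lemma sqnorm_eq0 x : sqnorm x = 0 -> x = hzero.
Proof. intro E. apply inner_def. rewrite inner_self, E. reflexivity. Qed.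

Lemma sqnorm_zero : sqnorm (@hzero H) = 0.
Proof. unfold sqnorm. rewrite inner_0l. reflexivity. Qed.

Lemma sqnorm_add x y : sqnorm (hadd x y) = sqnorm x + sqnorm y + 2 * fst (inner x y).
Proof.
  unfold sqnorm. rewrite inner_add, !inner_add_r, (inner_sym y x).
  destruct (inner x x), (inner x y), (inner y y). csimpl. ring.
Qed.

Lemma sqnorm_scal (s : C) x : sqnorm (hscal s x) = Cnorm2 s * sqnorm x.
Proof.
  unfold sqnorm at 1. rewrite inner_scal, inner_scal_r, inner_self. destruct s. unfold Cnorm2. csimpl. ring.
Qed.

Lemma sqnorm_opp x : sqnorm (hopp x) = sqnorm x.
Proof. rewrite hopp_eq_scal, sqnorm_scal, Cnorm2_real. ring. Qed.

Lemma sqnorm_sub a b : sqnorm (hs a b) = sqnorm a + sqnorm b - 2 * fst (inner a b).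
Proof. unfold hsub. rewrite sqnorm_add, sqnorm_opp, inner_opp_r. destruct (inner a b); csimpl; ring. Qed.

Lemma parallelogram a b : sqnorm (hadd a b) + sqnorm (hs a b) = 2 * sqnorm a + 2 * sqnorm b.
Proof. rewrite sqnorm_add, sqnorm_sub. ring. Qed.

Lemma Cauchy_Schwarz x y : Cnorm2 (inner x y) <= sqnorm x * sqnorm y.
Proof.
  destruct (Req_dec (sqnorm y) 0) as [Hy|Hy].
  { apply sqnorm_eq0 in Hy. subst. rewrite inner_0r, sqnorm_zero. unfold Cnorm2; simpl. lra. }
  pose proof (sqnorm_nonneg y).
  destruct (inner x y) as [a b] eqn:E.
  (* expand [0 <= |x + s y|^2] at the optimal [s = - <x,y> / |y|^2] *)
  pose proof (sqnorm_nonneg (hadd x (hscal (- a / sqnorm y, - b / sqnorm y) y))) as N.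
  rewrite sqnorm_add, sqnorm_scal, inner_scal_r, E in N. unfold Cnorm2 in *. csimpl_in_all.
  assert (N2 : 0 <= sqnorm x - (a*a + b*b) / sqnorm y).
  { eapply Rle_trans; [exact N|]. right. field. lra. }
  apply Rmult_le_compat_r with (r := sqnorm y) in N2; [|lra].
  replace ((sqnorm x - (a * a + b * b) / sqnorm y) * sqnorm y) with (sqnorm x * sqnorm y - (a*a+b*b)) in N2
    by (field; lra).
  lra.
Qed.

Lemma hnorm_sq x : hn x * hn x = sqnorm x.
Proof. apply sqrt_sqrt, sqnorm_nonneg. Qed.

Lemma hnorm_nonneg x : 0 <= hn x.
Proof. apply sqrt_pos. Qed.

Lemma hnorm_le_of_sqnorm x r : 0 <= r -> sqnorm x <= r * r -> hn x <= r.
Proof. intros Hr Hn. unfold hnorm. rewrite <- (sqrt_square r Hr). apply sqrt_le_1_alt. exact Hn. Qed.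

Lemma hnorm_lt_of_sqnorm x r : 0 < r -> sqnorm x < r * r -> hn x < r.
Proof.
  intros Hr Hx. unfold hnorm. rewrite <- (sqrt_square r) by lra. apply sqrt_lt_1_alt. split; auto. apply sqnorm_nonneg.
Qed.

Lemma hnorm_zero : hn (@hzero H) = 0.
Proof. unfold hnorm. fold (sqnorm (@hzero H)). rewrite sqnorm_zero. apply sqrt_0. Qed.

Lemma hnorm_eq0 x : hn x = 0 -> x = hzero.
Proof. intro E. apply sqnorm_eq0. rewrite <- hnorm_sq, E. ring. Qed.

Lemma hnorm_small_eq0 x : (forall eps, eps > 0 -> hn x <= eps) -> x = hzero.
Proof.
  intro Hs. apply hnorm_eq0. pose proof (hnorm_nonneg x).
  destruct (Req_dec (hn x) 0); auto. specialize (Hs (hn x / 2)). lra.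
Qed.

Lemma Cmod_inner_le x y : sqrt (Cnorm2 (inner x y)) <= hn x * hn y.
Proof.
  pose proof (hnorm_nonneg x); pose proof (hnorm_nonneg y).
  apply sqrt_le_of_sq. nra. rewrite sqrt_sqrt by apply Cnorm2_nonneg.
  replace (hn x * hn y * (hn x * hn y)) with (sqnorm x * sqnorm y) by (rewrite <- !hnorm_sq; ring).
  apply Cauchy_Schwarz.
Qed.

Lemma fst_inner_le x y : fst (inner x y) <= hn x * hn y.
Proof. eapply Rle_trans; [apply fst_le_Cmod|apply Cmod_inner_le]. Qed.

Lemma hnorm_triangle x y : hn (hadd x y) <= hn x + hn y.
Proof.
  pose proof (hnorm_nonneg x); pose proof (hnorm_nonneg y).
  apply hnorm_le_of_sqnorm. lra. rewrite sqnorm_add, <- !hnorm_sq. pose proof (fst_inner_le x y). nra.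
Qed.

Lemma hnorm_scal (s : C) x : hn (hscal s x) = sqrt (Cnorm2 s) * hn x.
Proof. unfold hnorm. fold (sqnorm (hscal s x)) (sqnorm x). rewrite sqnorm_scal. apply sqrt_mult_alt, Cnorm2_nonneg. Qed.

Lemma hnorm_scal_real r x : hn (hscal (r, 0) x) = Rabs r * hn x.
Proof. rewrite hnorm_scal, Cnorm2_real, <- sqrt_Rsqr_abs. reflexivity. Qed.

Lemma hnorm_opp x : hn (hopp x) = hn x.
Proof. unfold hnorm. fold (sqnorm (hopp x)) (sqnorm x). rewrite sqnorm_opp. reflexivity. Qed.

Lemma hnorm_hsub_sym a b : hn (hs a b) = hn (hs b a).
Proof. rewrite <- (hsub_opp_swap a b). symmetry; apply hnorm_opp. Qed.

Lemma hnorm_hsub_triangle a b c : hn (hs a c) <= hn (hs a b) + hn (hs b c).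
Proof. rewrite (hsub_chain a b c). apply hnorm_triangle. Qed.

End InnerProduct.

Section Operators.
Context {H : Hilbert}.
Implicit Types x y z a b : H.

Lemma lin_zero (T : op H) : is_linear T -> T hzero = hzero.
Proof. intros [_ Hs]. rewrite <- (hscal_0l hzero), Hs, !hscal_0l. reflexivity. Qed.

Lemma lin_opp (T : op H) x : is_linear T -> T (hopp x) = hopp (T x).
Proof. intros [_ Hs]. rewrite !hopp_eq_scal, Hs. reflexivity. Qed.

Lemma lin_sub (T : op H) x y : is_linear T -> T (hs x y) = hs (T x) (T y).
Proof. intros L. unfold hsub. rewrite (proj1 L), lin_opp; auto. Qed.

Lemma lin_lincomb (T : op H) cs vs : is_linear T -> T (lincomb H cs vs) = lincomb H cs (map T vs).
Proof.
  intros L. revert vs; induction cs as [|c cs IH]; intros [|v vs]; simpl; try apply lin_zero; auto.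
  rewrite (proj1 L), (proj2 L), IH. reflexivity.
Qed.

Lemma opnorm_le_zero_op (r : R) : 0 <= r -> opnorm_le (fun _ : H => hzero) r.
Proof. intros Hr x. rewrite hnorm_zero. pose proof (hnorm_nonneg x). nra. Qed.

Lemma hconv_dominated u a v b w c (k : R) : 0 <= k ->
  (forall n, hn (hs (w n) c) <= k * hn (hs (u n) a) + hn (hs (v n) b)) ->
  hconv H u a -> hconv H v b -> hconv H w c.
Proof.
  intros Hk Hd Hu Hv eps He.
  destruct (Hu (eps / (2 * (k + 1)))) as [N1 H1]. { apply Rdiv_lt_0_compat; lra. }
  destruct (Hv (eps / 2)) as [N2 H2]; [lra|].
  exists (max N1 N2). intros n Hn. specialize (H1 n ltac:(lia)). specialize (H2 n ltac:(lia)).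
  pose proof (Hd n). pose proof (hnorm_nonneg (hs (u n) a)).
  assert (k * hn (hs (u n) a) <= eps / 2).
  { apply Rle_trans with ((k + 1) * (eps / (2 * (k + 1)))). nra. right. field. lra. }
  lra.
Qed.

Lemma hconv_ext u v l : (forall n, u n = v n) -> hconv H u l -> hconv H v l.
Proof. intros E Hc eps He. destruct (Hc eps He) as [N HN]. exists N. intros n Hn. rewrite <- E. auto. Qed.

Lemma hconv_const a : hconv H (fun _ => a) a.
Proof. intros eps He. exists 0%nat. intros. rewrite hsub_same, hnorm_zero. lra. Qed.

Lemma hconv_eventually_zero (u : nat -> H) N : (forall n, (n >= N)%nat -> u n = hzero) -> hconv H u hzero.
Proof. intros E eps He. exists N. intros n Hn. rewrite E, hsub_same, hnorm_zero by auto. lra. Qed.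

Lemma hconv_add u a v b : hconv H u a -> hconv H v b -> hconv H (fun n => hadd (u n) (v n)) (hadd a b).
Proof.
  intros Hu Hv. apply (hconv_dominated u a v b _ _ 1); auto; [lra|].
  intro n. rewrite hsub_add_add, Rmult_1_l. apply hnorm_triangle.
Qed.

Lemma hconv_scal (s : C) u a : hconv H u a -> hconv H (fun n => hscal s (u n)) (hscal s a).
Proof.
  intro Hu. apply (hconv_dominated u a _ _ _ _ (sqrt (Cnorm2 s)) (sqrt_pos _)) with (2 := Hu) (3 := hconv_const a).
  intro n. rewrite <- hscal_hsub, hnorm_scal, hsub_same, hnorm_zero. lra.
Qed.

Lemma hconv_apply (T : nat -> op H) (M : R) u a b : 0 <= M ->
  (forall n, is_linear (T n)) -> (forall n, opnorm_le (T n) M) ->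
  hconv H u a -> hconv H (fun n => T n a) b -> hconv H (fun n => T n (u n)) b.
Proof.
  intros HM L B Hu Hb. apply (hconv_dominated u a (fun n => T n a) b _ b M HM); auto.
  intro n. rewrite (hsub_chain _ (T n a)), <- lin_sub by auto.
  eapply Rle_trans; [apply hnorm_triangle|]. pose proof (B n (hs (u n) a)). lra.
Qed.

Lemma sqnorm_hconv u a : hconv H u a ->
  forall eps, eps > 0 -> exists N, forall n, (n >= N)%nat -> Rabs (sqnorm (u n) - sqnorm a) < eps.
Proof.
  intros Hu eps He. pose proof (hnorm_nonneg a) as Hb. set (b := hn a) in *.
  set (del := Rmin 1 (eps / (2 * b + 2))).
  assert (Hd : 0 < del) by (unfold del; apply Rmin_glb_lt; [lra | apply Rdiv_lt_0_compat; lra]).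
  assert (del <= 1) by apply Rmin_l. assert (del <= eps / (2 * b + 2)) by apply Rmin_r.
  destruct (Hu del Hd) as [N HN]. exists N. intros n Hn. specialize (HN n Hn).
  pose proof (hnorm_triangle a (hs (u n) a)) as T1. rewrite hadd_hsub in T1.
  pose proof (hnorm_triangle (u n) (hs a (u n))) as T2. rewrite hadd_hsub, hnorm_hsub_sym in T2.
  rewrite <- !hnorm_sq.
  pose proof (hnorm_nonneg (u n)). pose proof (hnorm_nonneg (hs (u n) a)).
  assert (hn (hs (u n) a) * (2 * b + 2) < eps).
  { apply Rlt_le_trans with (del * (2 * b + 2)). nra.
    apply Rle_trans with (eps / (2 * b + 2) * (2 * b + 2)). nra. right; field; lra. }
  apply Rabs_def1; unfold b in *; nra.
Qed.

End Operators.

Lemma Rsmall_eq0 (x : R) : 0 <= x -> (forall eps, 0 < eps -> x <= eps) -> x = 0.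
Proof. intros H0 Hs. destruct (Req_dec x 0); auto. specialize (Hs (x/2)). lra. Qed.

Lemma inv_INR_S_pos (j : nat) : 0 < / INR (S j).
Proof. apply Rinv_0_lt_compat, lt_0_INR; lia. Qed.

Lemma inv_INR_S_small (eps : R) : 0 < eps -> exists J, forall i, (i >= J)%nat -> / INR (S i) < eps.
Proof.
  intro He. destruct (archimed_cor1 eps He) as [N [HN HN0]]. exists N. intros i Hi.
  eapply Rle_lt_trans; [|exact HN]. apply Rinv_le_contravar. apply lt_0_INR; lia. apply le_INR; lia.
Qed.

Section RieszRepresentation.
Context {H : Hilbert}.
Implicit Types x y z a b l : H.

Lemma hadd_hsub_midpoint z a b :
  hadd (hs z a) (hs z b) = hscal (2, 0) (hs z (hscal (/2, 0) (hadd a b))).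
Proof.
  rewrite <- hsub_add_add, hscal_hsub, hscal_two, hscal_mul.
  replace (Cmul (2, 0) (/ 2, 0)) with C1 by (csimpl; f_equal; field). rewrite hscal_one. reflexivity.
Qed.

Lemma near_minimizers_close (N : H -> Prop) z (d al be : R) a b :
  (forall a b, N a -> N b -> N (hscal (/2, 0) (hadd a b))) -> (forall n, N n -> d <= sqnorm (hs z n)) ->
  N a -> N b -> sqnorm (hs z a) <= d + al -> sqnorm (hs z b) <= d + be ->
  sqnorm (hs a b) <= 2 * al + 2 * be.
Proof.
  intros Nmid Dlow Na Nb Ha Hb. pose proof (parallelogram (hs z b) (hs z a)) as Par.
  rewrite hadd_hsub_midpoint, hsub_hsub_l, sqnorm_scal, Cnorm2_real in Par.
  pose proof (Dlow _ (Nmid _ _ Nb Na)). lra.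
Qed.

(** The Hilbert projection theorem, with convexity used only through midpoints. *)
Theorem nearest_point_exists (N : H -> Prop) z :
  N hzero ->
  (forall a b, N a -> N b -> N (hscal (/2, 0) (hadd a b))) ->
  (forall u l, (forall k, N (u k)) -> hconv H u l -> N l) ->
  exists l, N l /\ forall n, N n -> sqnorm (hs z l) <= sqnorm (hs z n).
Proof.
  intros N0 Nmid Nclosed.
  set (E := fun r => exists n, N n /\ r = - sqnorm (hs z n)).
  assert (Eb : bound E). { exists 0. intros r [n [_ ->]]. pose proof (sqnorm_nonneg (hs z n)). lra. }
  destruct (completeness E Eb (ex_intro _ _ (ex_intro _ hzero (conj N0 eq_refl)))) as [m [Hub Hlub]].
  set (d := - m).
  assert (Dlow : forall n, N n -> d <= sqnorm (hs z n)).
  { intros n Hn. assert (m >= - sqnorm (hs z n)) by (apply Rle_ge, Hub; exists n; auto). unfold d. lra. }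
  assert (Dmin : forall j : nat, exists n, N n /\ sqnorm (hs z n) < d + / INR (S j)).
  { intro j. apply NNPP. intro Hno.
    assert (Hub' : is_upper_bound E (m - / INR (S j))).
    { intros r [n [Hn ->]]. apply Rnot_lt_le. intro Hc. apply Hno. exists n. split; auto. unfold d. lra. }
    specialize (Hlub _ Hub'). pose proof (inv_INR_S_pos j). lra. }
  apply choice in Dmin. destruct Dmin as [u Hu].
  assert (Hconv : exists l, hconv H u l).
  { apply hcomplete. intros eps He. destruct (inv_INR_S_small (eps*eps/4)) as [J HJ]. nra.
    exists J. intros i j Hi Hj. change (hn (hs (u i) (u j)) < eps). apply hnorm_lt_of_sqnorm. lra.
    destruct (Hu i) as [Ni Hui], (Hu j) as [Nj Huj]. pose proof (HJ i Hi). pose proof (HJ j Hj).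
    pose proof (near_minimizers_close N z d _ _ (u i) (u j) Nmid Dlow Ni Nj (Rlt_le _ _ Hui) (Rlt_le _ _ Huj)).
    lra. }
  destruct Hconv as [l Hl].
  assert (Hzl : hconv H (fun j => hs z (u j)) (hs z l)).
  { intros eps He. destruct (Hl eps He) as [J HJ]. exists J. intros j Hj.
    rewrite hsub_hsub_l, hnorm_hsub_sym. auto. }
  exists l. split; [apply (Nclosed u l); auto; apply Hu|].
  intros n Hn. apply Rle_trans with d; [|auto].
  apply le_epsilon. intros eps He.
  destruct (sqnorm_hconv _ _ Hzl (eps/2)) as [J1 HJ1]; [lra|].
  destruct (inv_INR_S_small (eps/2)) as [J2 HJ2]; [lra|].
  specialize (HJ1 (max J1 J2) ltac:(lia)). specialize (HJ2 (max J1 J2) ltac:(lia)).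
  destruct (Hu (max J1 J2)) as [_ Hd]. apply Rabs_def2 in HJ1. lra.
Qed.

Lemma nearest_point_orthogonal (N : H -> Prop) z l :
  (forall a b, N a -> N b -> N (hadd a b)) -> (forall (s : C) a, N a -> N (hscal s a)) ->
  N l -> (forall n, N n -> sqnorm (hs z l) <= sqnorm (hs z n)) ->
  forall n, N n -> inner (hs z l) n = C0.
Proof.
  intros Nadd Nscal Nl Hmin n Nn. set (e := hs z l). destruct (inner e n) as [p q] eqn:Ec.
  pose proof (sqnorm_nonneg n).
  set (s := / (sqnorm n + 1)).
  assert (Hs : 0 < s) by (apply Rinv_0_lt_compat; lra).
  assert (Hsn : s * sqnorm n < 1).
  { unfold s. apply (Rmult_lt_reg_l (sqnorm n + 1)). lra. field_simplify; lra. }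
  (* compare with the competitor [l + s <e,n> n] *)
  set (t := (s * p, s * q)).
  pose proof (Hmin _ (Nadd _ _ Nl (Nscal t _ Nn))) as Hcomp.
  rewrite <- hsub_hsub_add in Hcomp. fold e in Hcomp.
  rewrite sqnorm_sub, sqnorm_scal, inner_scal_r, Ec in Hcomp. unfold t, Cnorm2 in Hcomp. csimpl_in_all.
  assert (Hpq : (p * p + q * q) * (s * (s * sqnorm n) - 2 * s) >= 0) by nra.
  assert (s * (s * sqnorm n) - 2 * s < 0) by nra.
  assert (p * p + q * q = 0) by nra. f_equal; nra.
Qed.

Definition clinear (f : H -> C) :=
  (forall x y, f (hadd x y) = Cadd (f x) (f y)) /\ (forall (s : C) x, f (hscal s x) = Cmul s (f x)).

Lemma clinear_zero f : clinear f -> f hzero = C0.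
Proof. intros [_ Hs]. rewrite <- (hscal_0l hzero), Hs. csimpl. f_equal; ring. Qed.

Lemma clinear_sub f x y : clinear f -> f (hs x y) = Cadd (f x) (Cmul (-1,0) (f y)).
Proof. intros [Ha Hs]. unfold hsub. rewrite Ha, hopp_eq_scal, Hs. reflexivity. Qed.

Lemma bounded_clinear_kernel_closed f (M : R) u l : clinear f -> 0 <= M ->
  (forall x, Cnorm2 (f x) <= M * sqnorm x) ->
  (forall k, f (u k) = C0) -> hconv H u l -> f l = C0.
Proof.
  intros Lf HM Bf Hu Hl. apply Cnorm2_eq0, Rsmall_eq0; [apply Cnorm2_nonneg|]. intros del Hdel.
  destruct (Hl (sqrt (del / (M + 1)))) as [J HJ]. { apply sqrt_lt_R0, Rdiv_lt_0_compat; lra. }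
  specialize (HJ J (le_n J)).
  replace (f l) with (f (hs l (u J))) by (rewrite clinear_sub, Hu by auto; destruct (f l); csimpl; f_equal; ring).
  eapply Rle_trans; [apply Bf|]. rewrite <- hnorm_sq, hnorm_hsub_sym.
  pose proof (hnorm_nonneg (hs (u J) l)).
  assert (hn (hs (u J) l) * hn (hs (u J) l) <= del / (M + 1)).
  { rewrite <- (sqrt_sqrt (del / (M + 1))) by (apply Rlt_le, Rdiv_lt_0_compat; lra).
    pose proof (sqrt_pos (del / (M + 1))). nra. }
  apply Rle_trans with ((M + 1) * (del / (M + 1))). nra. right. field. lra.
Qed.

Theorem Riesz_representation f (M : R) : clinear f -> 0 <= M -> (forall x, Cnorm2 (f x) <= M * sqnorm x) ->
  exists w, forall z, f z = inner z w.
Proof.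
  intros Lf HM Bf.
  destruct (classic (forall z, f z = C0)) as [Z|NZ].
  { exists hzero. intro z. rewrite Z, inner_0r. reflexivity. }
  apply not_all_ex_not in NZ. destruct NZ as [z0 Hz0].
  set (N := fun n => f n = C0).
  assert (Nadd : forall a b, N a -> N b -> N (hadd a b)).
  { unfold N. intros a b Ha Hb. rewrite (proj1 Lf), Ha, Hb. csimpl. f_equal; ring. }
  assert (Nscal : forall (s : C) a, N a -> N (hscal s a)).
  { unfold N. intros s a Ha. rewrite (proj2 Lf), Ha. csimpl. f_equal; ring. }
  destruct (nearest_point_exists N z0) as [l [Nl Hmin]].
  - apply clinear_zero; auto.
  - auto.
  - intros u l Hu. apply (bounded_clinear_kernel_closed f M); auto.
  - pose proof (nearest_point_orthogonal N z0 l Nadd Nscal Nl Hmin) as Horth.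
    set (e := hs z0 l) in *.
    assert (Fe : f e = f z0).
    { unfold e. rewrite clinear_sub, Nl by auto. destruct (f z0); csimpl; f_equal; ring. }
    assert (Nse : sqnorm e <> 0).
    { intro Z. apply sqnorm_eq0 in Z. apply Hz0. rewrite <- Fe, Z. apply clinear_zero; auto. }
    clearbody e. destruct (f z0) as [fa fb] eqn:Ef.
    assert (Hfn : fa * fa + fb * fb <> 0). { intro Z. apply Hz0. unfold C0. f_equal; nra. }
    exists (hscal (fa / sqnorm e, - fb / sqnorm e) e).
    intro z. destruct (f z) as [za zb] eqn:Ez.
    (* [z - (f z / f z0) e] lies in the kernel, hence is orthogonal to [e] *)
    set (al := ((za * fa + zb * fb) / (fa * fa + fb * fb), (zb * fa - za * fb) / (fa * fa + fb * fb))).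
    assert (Nz : N (hs z (hscal al e))).
    { unfold N. rewrite clinear_sub, (proj2 Lf), Fe, Ez by auto. unfold al. csimpl. f_equal; field; auto. }
    pose proof (Horth _ Nz) as O. rewrite inner_sym, inner_sub_l, inner_scal, inner_self in O.
    rewrite inner_scal_r. destruct (inner z e) as [ia ib]. unfold al in O. csimpl_in_all.
    injection O; intros O2 O1.
    assert (Ha : ia = (za * fa + zb * fb) / (fa * fa + fb * fb) * sqnorm e) by nra.
    assert (Hb : ib = (zb * fa - za * fb) / (fa * fa + fb * fb) * sqnorm e) by nra.
    rewrite Ha, Hb. f_equal; field; split; auto.
Qed.

End RieszRepresentation.

Lemma strict_mono_ge (phi : nat -> nat) : (forall k, (phi k < phi (S k))%nat) -> forall k, (k <= phi k)%nat.
Proof. intros Hp k. induction k; [lia|]. specialize (Hp k). lia. Qed.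

Lemma strict_mono_lt (phi : nat -> nat) : (forall k, (phi k < phi (S k))%nat) ->
  forall a b, (a < b)%nat -> (phi a < phi b)%nat.
Proof. intros Hp a b Hab. induction Hab; [apply Hp|]. specialize (Hp m). lia. Qed.

(** Sequential form of Stdlib's [Bolzano_Weierstrass] (which only gives a cluster point). *)
Lemma bounded_Rseq_cv_subseq (u : nat -> R) (M : R) : (forall n, Rabs (u n) <= M) ->
  exists phi : nat -> nat, (forall k, (phi k < phi (S k))%nat) /\
    exists l, forall eps, eps > 0 -> exists N, forall j, (j >= N)%nat -> Rabs (u (phi j) - l) < eps.
Proof.
  intro Hb.
  destruct (Bolzano_Weierstrass u (fun c => -M <= c <= M) (compact_P3 (-M) M)) as [l Hl].
  { intro n. specialize (Hb n). unfold Rabs in Hb. destruct (Rcase_abs (u n)); lra. }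
  assert (Ex : forall Nj : nat * nat, exists p, (fst Nj <= p)%nat /\ Rabs (u p - l) < / INR (S (snd Nj))).
  { intros [N j]. destruct (Hl (disc l (mkposreal _ (inv_INR_S_pos j))) N) as [p [Hp Hd]].
    { exists (mkposreal _ (inv_INR_S_pos j)). intros y Hy; exact Hy. }
    exists p. split; auto. }
  apply choice in Ex. destruct Ex as [g Hg].
  (* the [j]-th index lies beyond the previous one and is [1/(j+1)]-close to [l] *)
  set (phi := fix phi (j : nat) : nat :=
         match j with O => g (0%nat, 0%nat) | S j' => g (S (phi j'), S j') end).
  exists phi. split.
  - intro k. simpl. destruct (Hg (S (phi k), S k)) as [H1 _]. simpl in H1. lia.
  - exists l. intros eps He. destruct (inv_INR_S_small eps He) as [J HJ]. exists J. intros j Hj.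
    eapply Rlt_trans; [|apply (HJ j Hj)].
    destruct j; simpl; [exact (proj2 (Hg (0%nat, 0%nat)))|exact (proj2 (Hg (S (phi j), S j)))].
Qed.

Lemma bounded_Cseq_cv_subseq (c : nat -> C) (M : R) : (forall n, sqrt (Cnorm2 (c n)) <= M) ->
  exists phi : nat -> nat, (forall k, (phi k < phi (S k))%nat) /\
    exists l : C, forall eps, eps > 0 -> exists N, forall j, (j >= N)%nat ->
      sqrt (Cnorm2 (Cadd (c (phi j)) (Cmul (-1, 0) l))) < eps.
Proof.
  intro Hb.
  destruct (bounded_Rseq_cv_subseq (fun n => fst (c n)) M) as [p1 [Hp1 [l1 Hl1]]].
  { intro n. eapply Rle_trans; [apply Rabs_fst_le_Cmod|apply Hb]. }
  destruct (bounded_Rseq_cv_subseq (fun n => snd (c (p1 n))) M) as [p2 [Hp2 [l2 Hl2]]].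
  { intro n. eapply Rle_trans; [apply Rabs_snd_le_Cmod|apply Hb]. }
  exists (fun j => p1 (p2 j)). split; [intro k; apply strict_mono_lt; auto|].
  exists (l1, l2). intros eps He.
  destruct (Hl1 (eps/2)) as [N1 H1]; [lra|]. destruct (Hl2 (eps/2)) as [N2 H2]; [lra|].
  exists (max N1 N2). intros j Hj.
  pose proof (strict_mono_ge _ Hp2 j).
  specialize (H1 (p2 j) ltac:(lia)). specialize (H2 j ltac:(lia)). simpl in H1, H2.
  eapply Rle_lt_trans; [apply Cmod_le_Rabs|]. csimpl.
  replace (fst (c (p1 (p2 j))) + (-1 * l1 - 0 * l2)) with (fst (c (p1 (p2 j))) - l1) by ring.
  replace (snd (c (p1 (p2 j))) + (-1 * l2 + 0 * l1)) with (snd (c (p1 (p2 j))) - l2) by ring.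
  lra.
Qed.

Section BoundedOperators.
Context {H : Hilbert}.
Implicit Types x y z w v : H.

Lemma adjoint_linear_bounded (T S : op H) (M : R) : is_adjoint T S -> 0 <= M -> opnorm_le T M ->
  is_linear S /\ opnorm_le S M.
Proof.
  intros Adj HM B. split; [split|].
  - intros x y. apply inner_ext_r. intro z. rewrite <- Adj, !inner_add_r, <- !Adj. reflexivity.
  - intros s x. apply inner_ext_r. intro z. rewrite <- Adj, !inner_scal_r, <- Adj. reflexivity.
  - intro y. pose proof (hnorm_nonneg (S y)). pose proof (hnorm_nonneg y).
    (* [|S y|^2 = <T (S y), y> <= M |S y| |y|] *)
    assert (E : hn (S y) * hn (S y) <= M * hn (S y) * hn y).
    { rewrite hnorm_sq. unfold sqnorm. rewrite <- Adj. eapply Rle_trans; [apply fst_inner_le|].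
      pose proof (B (S y)). nra. }
    destruct (Req_dec (hn (S y)) 0) as [Z|NZ]; [rewrite Z; nra|].
    assert (0 < hn (S y)) by lra. nra.
Qed.

Lemma adjoint_exists (K : op H) (M : R) : is_linear K -> 0 <= M -> opnorm_le K M ->
  exists Ks : op H, is_adjoint K Ks.
Proof.
  intros L HM B.
  assert (Ex : forall y, exists w, forall z, inner (K z) y = inner z w).
  { intro y. apply (Riesz_representation (fun z => inner (K z) y) (M * M * sqnorm y)).
    - split; intros; [rewrite (proj1 L), inner_add | rewrite (proj2 L), inner_scal]; reflexivity.
    - pose proof (sqnorm_nonneg y). nra.
    - intro z. eapply Rle_trans; [apply Cauchy_Schwarz|]. rewrite <- !hnorm_sq.
      pose proof (B z). pose proof (hnorm_nonneg (K z)). pose proof (hnorm_nonneg z). pose proof (hnorm_nonneg y).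
      assert (hn (K z) * hn (K z) <= M * M * (hn z * hn z)) by nra. nra. }
  apply choice in Ex. destruct Ex as [Ks HKs]. exists Ks. intros x y. apply HKs.
Qed.

Lemma compact_bounded (K : op H) : compact K -> exists M, 0 <= M /\ opnorm_le K M.
Proof.
  intros [L Cp]. apply NNPP. intro NB.
  assert (Ex : forall j : nat, exists x, hn x = 1 /\ INR j < hn (K x)).
  { intro j. apply NNPP. intro Hno. apply NB. exists (INR j). split; [apply pos_INR|].
    intro x. destruct (Req_dec (hn x) 0) as [Z|NZ].
    - apply hnorm_eq0 in Z. subst. rewrite lin_zero, hnorm_zero by auto. lra.
    - pose proof (hnorm_nonneg x). set (c := / hn x).
      assert (Hc : 0 < c) by (apply Rinv_0_lt_compat; lra).
      apply Rnot_lt_le. intro Hlt. apply Hno. exists (hscal (c, 0) x). split.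
      + rewrite hnorm_scal_real, Rabs_right by lra. unfold c. field. auto.
      + rewrite (proj2 L), hnorm_scal_real, Rabs_right by lra.
        apply (Rmult_lt_reg_l (hn x)). lra. unfold c. field_simplify; auto. lra. }
  apply choice in Ex. destruct Ex as [u Hu].
  destruct (Cp u) as [phi [Hphi [y Hy]]]. { exists 1. intro k. rewrite (proj1 (Hu k)). lra. }
  destruct (Hy 1 ltac:(lra)) as [N1 HN1].
  destruct (INR_archimed 1 (hn y + 1)) as [N2 HN2]; [lra|].
  set (k := max N1 N2). specialize (HN1 k ltac:(lia)).
  assert (INR N2 <= INR (phi k)) by (apply le_INR; pose proof (strict_mono_ge _ Hphi k); lia).
  pose proof (proj2 (Hu (phi k))). pose proof (hnorm_triangle y (hs (K (u (phi k))) y)).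
  rewrite hadd_hsub in *. lra.
Qed.

Definition rank_one (w v : H) : op H := fun x => hscal (inner x v) w.

Lemma rank_one_linear w v : is_linear (rank_one w v).
Proof.
  unfold rank_one. split.
  - intros x y. rewrite inner_add, hscal_adds. reflexivity.
  - intros s x. rewrite inner_scal, hscal_mul. reflexivity.
Qed.

Lemma rank_one_compact w v : compact (rank_one w v).
Proof.
  split; [apply rank_one_linear|]. intros u [M HM].
  destruct (bounded_Cseq_cv_subseq (fun k => inner (u k) v) (M * hn v)) as [phi [Hphi [l Hl]]].
  { intro n. eapply Rle_trans; [apply Cmod_inner_le|]. pose proof (hnorm_nonneg v). specialize (HM n). nra. }
  exists phi. split; auto. exists (hscal l w).
  pose proof (hnorm_nonneg w).
  intros eps He. destruct (Hl (eps / (hn w + 1))) as [N HN]. { apply Rdiv_lt_0_compat; lra. }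
  exists N. intros j Hj. unfold rank_one. rewrite hsub_hscal_r, hnorm_scal. specialize (HN j Hj).
  assert (0 < eps / (hn w + 1)) by (apply Rdiv_lt_0_compat; lra).
  apply Rle_lt_trans with (eps / (hn w + 1) * hn w).
  { pose proof (sqrt_pos (Cnorm2 (Cadd (inner (u (phi j)) v) (Cmul (-1, 0) l)))). nra. }
  apply Rlt_le_trans with (eps / (hn w + 1) * (hn w + 1)). nra. right. field. lra.
Qed.

End BoundedOperators.

Section OrthogonalProjections.
Context {H : Hilbert}.
Implicit Types x y z w v a b : H.
Variable P : op H.
Hypothesis HP : orth_proj P.

Lemma orth_proj_linear : is_linear P.
Proof. apply HP. Qed.

Lemma orth_proj_idem x : P (P x) = P x.
Proof. apply HP. Qed.

Lemma orth_proj_adjoint x y : inner (P x) y = inner x (P y).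
Proof. apply HP. Qed.

Lemma orth_proj_orthogonal x y : inner (P x) (hs y (P y)) = C0.
Proof.
  rewrite inner_sub_r, !orth_proj_adjoint, orth_proj_idem.
  destruct (inner x (P y)). csimpl. f_equal; ring.
Qed.

Lemma orth_proj_Pythagoras x : sqnorm x = sqnorm (P x) + sqnorm (hs x (P x)).
Proof. rewrite <- (hadd_hsub x (P x)) at 1. rewrite sqnorm_add, orth_proj_orthogonal. simpl. ring. Qed.

Lemma orth_proj_sqnorm_le x : sqnorm (P x) <= sqnorm x.
Proof. pose proof (orth_proj_Pythagoras x). pose proof (sqnorm_nonneg (hs x (P x))). lra. Qed.

Lemma orth_proj_contraction x : hn (P x) <= hn x.
Proof. apply sqrt_le_of_sq; [apply hnorm_nonneg|]. rewrite !hnorm_sq. apply orth_proj_sqnorm_le. Qed.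

Lemma orth_proj_sqnorm_inner a : sqnorm (P a) = fst (inner (P a) a).
Proof. unfold sqnorm. rewrite (orth_proj_adjoint a (P a)), orth_proj_idem, <- orth_proj_adjoint. reflexivity. Qed.

Lemma orth_proj_inner_self a : inner (P a) a = (sqnorm (P a), 0).
Proof. rewrite <- inner_self, (orth_proj_adjoint a (P a)), orth_proj_idem, <- orth_proj_adjoint. reflexivity. Qed.

Lemma orth_proj_fst_inner_sym x y : fst (inner (P y) x) = fst (inner (P x) y).
Proof. rewrite orth_proj_adjoint, inner_sym. destruct (inner (P x) y); reflexivity. Qed.

End OrthogonalProjections.

Lemma orth_proj_eq_of_sqnorm {H : Hilbert} (P1 P2 : op H) : orth_proj P1 -> orth_proj P2 ->
  (forall a, sqnorm (P1 a) = sqnorm (P2 a)) -> forall x, P1 x = P2 x.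
Proof.
  intros H1 H2 E x.
  set (phi := fun a b => fst (inner (P1 a) b) - fst (inner (P2 a) b)).
  assert (Diag : forall a, phi a a = 0).
  { intro a. unfold phi. rewrite <- !orth_proj_sqnorm_inner by auto. rewrite E. ring. }
  assert (Sym : forall a b, phi a b = phi b a).
  { intros a b. unfold phi. rewrite (orth_proj_fst_inner_sym _ H1 a b), (orth_proj_fst_inner_sym _ H2 a b). reflexivity. }
  assert (Add : forall a b, phi (hadd a b) (hadd a b) = phi a a + phi b b + phi a b + phi b a).
  { intros a b. unfold phi.
    rewrite (proj1 (orth_proj_linear _ H1)), (proj1 (orth_proj_linear _ H2)), !inner_add, !inner_add_r.
    destruct (inner (P1 a) a), (inner (P1 a) b), (inner (P1 b) a), (inner (P1 b) b),
      (inner (P2 a) a), (inner (P2 a) b), (inner (P2 b) a), (inner (P2 b) b). csimpl. ring. }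
  assert (Zero : forall a b, phi a b = 0).
  { intros a b. pose proof (Add a b) as Hab. rewrite !Diag, (Sym b a) in Hab. lra. }
  apply hsub_eq0, sqnorm_eq0. unfold sqnorm. rewrite inner_sub_l.
  specialize (Zero x (hs (P1 x) (P2 x))). unfold phi in Zero.
  destruct (inner (P1 x) (hs (P1 x) (P2 x))), (inner (P2 x) (hs (P1 x) (P2 x))). csimpl. simpl in Zero. lra.
Qed.

Section FiniteRank.
Context {H : Hilbert}.
Implicit Types x y z w v a b : H.

Definition rank_one_sum (ps : list (H * H)) : op H :=
  fun x => fold_right (fun p acc => hadd (rank_one (fst p) (snd p) x) acc) hzero ps.

Lemma rank_one_sum_linear ps : is_linear (rank_one_sum ps).
Proof.
  induction ps as [|[u v] ps IH]; unfold rank_one_sum, rank_one in *; simpl in *; split.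
  - intros; rewrite hadd_zero; reflexivity.
  - intros; rewrite hscal_0r; reflexivity.
  - intros x y. rewrite (proj1 IH), inner_add, hscal_adds, hadd_add_swap. reflexivity.
  - intros s x. rewrite (proj2 IH), inner_scal, hscal_addv, hscal_mul. reflexivity.
Qed.

Lemma lin_rank_one_sum (T : op H) ps x : is_linear T ->
  T (rank_one_sum ps x) = rank_one_sum (map (fun p => (T (fst p), snd p)) ps) x.
Proof.
  intro L. induction ps as [|p ps IH]; unfold rank_one_sum, rank_one in *; simpl.
  - apply lin_zero; auto.
  - rewrite (proj1 L), (proj2 L), IH. reflexivity.
Qed.

(** [Q] is the orthogonal projection onto the span of [L]; that its range lies in the span
    is phrased without spans: every linear map fixing [L] fixes the range of [Q]. *)
Definition projection_onto_span (L : list H) (Q : op H) : Prop :=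
  is_adjoint Q Q /\
  (forall x, Q (Q x) = Q x) /\
  (forall y, In y L -> Q y = y) /\
  (forall T : op H, is_linear T -> (forall y, In y L -> T y = y) -> forall x, T (Q x) = Q x).

Lemma Gram_Schmidt_step L w ps : projection_onto_span L (rank_one_sum ps) ->
  exists ps', projection_onto_span (w :: L) (rank_one_sum ps').
Proof.
  intros [P1 [P2 [P3 P4]]].
  set (Q := rank_one_sum ps) in *. pose proof (rank_one_sum_linear ps) as LQ. fold Q in LQ.
  set (w' := hs w (Q w)).
  assert (Qw' : Q w' = hzero) by (unfold w'; rewrite lin_sub, P2 by auto; apply hsub_same).
  assert (Ow' : forall x, inner (Q x) w' = C0) by (intro x; rewrite P1, Qw', inner_0r; reflexivity).
  assert (Lfix : forall T : op H, (forall y, In y (w :: L) -> T y = y) -> forall y, In y L -> T y = y)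
    by (intros T HT y Hy; apply HT; right; auto).
  destruct (classic (w' = hzero)) as [Z|NZ].
  { exists ps. fold Q. split; [|split; [|split]]; auto.
    intros y [<-|Hy]; auto. symmetry. apply hsub_eq0. exact Z. }
  (* otherwise add the normalised rank-one projection onto [w'] *)
  set (n := sqnorm w'). assert (Hn : n <> 0) by (intro E; apply NZ, sqnorm_eq0; exact E).
  exists ((hscal (/n, 0) w', w') :: ps).
  assert (EQ : forall x, rank_one_sum ((hscal (/n, 0) w', w') :: ps) x = hadd (hscal (Cmul (inner x w') (/n, 0)) w') (Q x)).
  { intro x. unfold rank_one_sum, rank_one. simpl. rewrite hscal_mul. reflexivity. }
  assert (Iw : inner w w' = (n, 0)).
  { replace w with (hadd (Q w) w') at 1 by apply hadd_hsub. rewrite inner_add, Ow', inner_self.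
    unfold n. csimpl. f_equal; ring. }
  split; [|split; [|split]]; [intros x y|intros x|intros y Hy|intros T LT HT x]; rewrite ?EQ.
  - rewrite inner_add, inner_add_r, inner_scal, inner_scal_r, P1. f_equal.
    rewrite (inner_sym y w'). destruct (inner x w'), (inner w' y). csimpl. f_equal; ring.
  - rewrite inner_add, inner_scal, Ow', inner_self. fold n.
    rewrite (proj1 LQ), (proj2 LQ), Qw', hscal_0r, hadd_0l, P2. f_equal. f_equal.
    destruct (inner x w'). csimpl. f_equal; field; auto.
  - destruct Hy as [<-|Hy].
    + rewrite Iw. replace (Cmul (n, 0) (/ n, 0)) with C1 by (csimpl; f_equal; field; auto).
      rewrite hscal_one, hadd_comm. apply hadd_hsub.
    + rewrite P3 by auto. rewrite <- (P3 y Hy) at 1. rewrite Ow', hscal_zero_scalar by (csimpl; ring).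
      apply hadd_0l.
  - rewrite (proj1 LT), (proj2 LT), P4 by auto. do 2 f_equal.
    unfold w'. rewrite lin_sub, P4, HT; auto. left; auto.
Qed.

Lemma Gram_Schmidt L : exists ps, projection_onto_span L (rank_one_sum ps).
Proof.
  induction L as [|w L [ps IH]]; [|apply (Gram_Schmidt_step _ _ ps IH)].
  exists nil. split; [|split; [|split]]; simpl.
  - intros x y. unfold rank_one_sum. simpl. rewrite inner_0l, inner_0r. reflexivity.
  - reflexivity.
  - intros y [].
  - intros T LT _ x. apply lin_zero; auto.
Qed.

Lemma finite_rank_proj_rank_one_sum (P : op H) : orth_proj P -> finite_rank P ->
  exists ps, forall x, P x = rank_one_sum ps x.
Proof.
  intros HP [vs Hvs]. destruct (Gram_Schmidt (map P vs)) as [ps [P1 [P2 [P3 P4]]]].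
  exists ps. pose proof (rank_one_sum_linear ps) as LQ.
  assert (PQ : forall x, P (rank_one_sum ps x) = rank_one_sum ps x).
  { apply P4; [apply orth_proj_linear; auto|].
    intros y Hy. apply in_map_iff in Hy. destruct Hy as [v [<- _]]. apply orth_proj_idem; auto. }
  assert (QP : forall x, rank_one_sum ps (P x) = P x).
  { intro x. destruct (Hvs x) as [cs [_ E]]. rewrite <- (orth_proj_idem P HP x), E.
    rewrite !lin_lincomb by (auto; apply orth_proj_linear; auto). f_equal. rewrite map_map.
    apply map_ext_in. intros v Hv. apply P3, in_map; auto. }
  intro x. apply inner_ext_l. intro y. rewrite <- (QP x), P1, (orth_proj_adjoint P HP x), PQ, <- P1. reflexivity.
Qed.

Definition vec_norm_sum (ps : list (H * H)) : R := fold_right (fun p acc => hn (snd p) + acc) 0 ps.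

Lemma vec_norm_sum_nonneg ps : 0 <= vec_norm_sum ps.
Proof. induction ps as [|p ps IH]; simpl; [lra|]. pose proof (hnorm_nonneg (snd p)). lra. Qed.

Lemma rank_one_sum_inner_le ps x y (c : R) : 0 <= c ->
  (forall p, In p ps -> sqrt (Cnorm2 (inner (fst p) y)) <= c) ->
  fst (inner (rank_one_sum ps x) y) <= hn x * c * vec_norm_sum ps.
Proof.
  intros Hc. induction ps as [|[u v] ps IH]; intros Hb; unfold rank_one_sum, rank_one in *; simpl in *.
  - rewrite inner_0l. simpl. lra.
  - rewrite inner_add, inner_scal. simpl.
    assert (fst (Cmul (inner x v) (inner u y)) <= hn x * hn v * c).
    { eapply Rle_trans; [apply fst_le_Cmod|]. rewrite Cnorm2_mul, sqrt_mult_alt by apply Cnorm2_nonneg.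
      pose proof (Cmod_inner_le x v). pose proof (Hb (u, v) (or_introl eq_refl)). simpl in *.
      pose proof (sqrt_pos (Cnorm2 (inner x v))). pose proof (sqrt_pos (Cnorm2 (inner u y))).
      pose proof (hnorm_nonneg x). pose proof (hnorm_nonneg v). nra. }
    specialize (IH (fun p Hp => Hb p (or_intror Hp))). simpl in *. nra.
Qed.

End FiniteRank.

Section Filtration.
Context {H : Hilbert}.
Implicit Types x y z w v a b : H.
Variable P : nat -> op H.
Hypothesis HP : filtration P.

Lemma filt_orth_proj n : orth_proj (P n).
Proof. apply (proj1 HP n). Qed.

Lemma filt_linear n : is_linear (P n).
Proof. apply orth_proj_linear, filt_orth_proj. Qed.

Lemma filt_idem n x : P n (P n x) = P n x.
Proof. apply orth_proj_idem, filt_orth_proj. Qed.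

Lemma filt_rank_one_sum n : exists ps, forall x, P n x = rank_one_sum ps x.
Proof. apply finite_rank_proj_rank_one_sum; apply (proj1 HP n). Qed.

Lemma filt_hconv_list (ps : list (H * H)) (eps : R) : eps > 0 ->
  exists N, forall m, (m >= N)%nat -> forall p, In p ps -> hn (hs (fst p) (P m (fst p))) < eps.
Proof.
  intro He. induction ps as [|p ps [N1 H1]]; [exists 0%nat; intros m _ p []|].
  destruct (proj2 HP (fst p) eps He) as [N2 H2].
  exists (max N1 N2). intros m Hm q [<-|Hq].
  - rewrite hnorm_hsub_sym. apply H2. lia.
  - apply H1; auto. lia.
Qed.

(** If [P_k = I] then [H] is finite dimensional, and the convergence [P_m -> I], uniform on
    an orthonormal basis, forces [P_m = I] for large [m]. *)
Lemma filt_eventually_identity k : (forall a, P k a = a) ->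
  exists N, forall m, (m >= N)%nat -> forall y, P m y = y.
Proof.
  intro Id. destruct (filt_rank_one_sum k) as [ps Hps].
  pose proof (vec_norm_sum_nonneg ps) as HB. set (B := vec_norm_sum ps) in *.
  set (del := / (2 * (B + 1))). assert (Hdel : 0 < del) by (apply Rinv_0_lt_compat; lra).
  assert (HdelB : del * B <= 1/2).
  { apply Rle_trans with (del * (B + 1)). nra. right. unfold del. field. lra. }
  destruct (filt_hconv_list ps del) as [N HN]; [lra|].
  exists N. intros m Hm y. set (z := hs y (P m y)).
  assert (Pz : P m z = hzero) by (unfold z; rewrite lin_sub, filt_idem by apply filt_linear; apply hsub_same).
  (* [|z|^2 = <P_k z, z>] and every basis vector [e] of [P_k] satisfies [<e, z> = <e - P_m e, z>] *)
  assert (Bd : fst (inner (rank_one_sum ps z) z) <= hn z * (del * hn z) * B).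
  { pose proof (hnorm_nonneg z). apply rank_one_sum_inner_le; [nra|].
    intros p Hp. replace (inner (fst p) z) with (inner (hs (fst p) (P m (fst p))) z).
    - eapply Rle_trans; [apply Cmod_inner_le|]. pose proof (HN m Hm p Hp). nra.
    - rewrite inner_sub_l, (orth_proj_adjoint _ (filt_orth_proj m)), Pz, inner_0r.
      destruct (inner (fst p) z). csimpl. f_equal; ring. }
  rewrite <- Hps, Id in Bd. fold (sqnorm z) in Bd. rewrite <- hnorm_sq in Bd.
  assert (E : hn z * hn z = 0) by (pose proof (hnorm_nonneg z); nra).
  rewrite hnorm_sq in E. symmetry. apply hsub_eq0, sqnorm_eq0, E.
Qed.

Lemma filt_not_identity k : injective_filtration P -> exists a, sqnorm (P k a) <> sqnorm a.
Proof.
  intro Inj. apply NNPP. intro Hno.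
  assert (Id : forall a, P k a = a).
  { intro a. assert (E : sqnorm (P k a) = sqnorm a) by (apply NNPP; intro; apply Hno; exists a; auto).
    pose proof (orth_proj_Pythagoras _ (filt_orth_proj k) a). symmetry. apply hsub_eq0, sqnorm_eq0. lra. }
  destruct (filt_eventually_identity k Id) as [N HN].
  destruct (Inj N (S N)) as [x Hx]; [lia|]. apply Hx. rewrite (HN N), (HN (S N)) by lia. reflexivity.
Qed.

Lemma filt_separate k m : injective_filtration P -> m <> k -> exists a, sqnorm (P m a) <> sqnorm (P k a).
Proof.
  intros Inj Hmk. apply NNPP. intro Hno. destruct (Inj m k Hmk) as [x Hx]. apply Hx.
  apply orth_proj_eq_of_sqnorm; try apply filt_orth_proj. intro a. apply NNPP. intro. apply Hno. exists a. auto.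
Qed.

(** Take [a] with [|P_k a| <> |a|] (as [P_k <> I]) and normalise [|P_n a|^2 - |a|^2] to be
    [1] at [k]; it tends to [0]. *)
Lemma filt_affine_decay k : injective_filtration P ->
  exists (al be : R) a M, al * sqnorm (P k a) + be = 1 /\
    forall n, (n >= M)%nat -> Rabs (al * sqnorm (P n a) + be) <= 1/2.
Proof.
  intro Inj. destruct (filt_not_identity k Inj) as [a Ha].
  set (d := sqnorm (P k a) - sqnorm a). assert (Hd : d <> 0) by (unfold d; lra).
  pose proof (Rabs_pos_lt d Hd) as Hdpos.
  destruct (sqnorm_hconv _ _ (proj2 HP a) (Rabs d / 2)) as [M HM]; [lra|].
  exists (/ d), (- sqnorm a / d), a, M. split; [unfold d; field; auto|].
  intros n Hn. specialize (HM n Hn).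
  replace (/ d * sqnorm (P n a) + - sqnorm a / d) with ((sqnorm (P n a) - sqnorm a) / d) by (field; auto).
  unfold Rdiv. rewrite Rabs_mult, Rabs_inv.
  apply (Rmult_le_reg_r (Rabs d)); [lra|]. rewrite Rmult_assoc, Rinv_l by lra. lra.
Qed.

Lemma affine_sqnorm_bound (al be : R) a n : Rabs (al * sqnorm (P n a) + be) <= Rabs al * sqnorm a + Rabs be.
Proof.
  pose proof (orth_proj_sqnorm_le _ (filt_orth_proj n) a). pose proof (sqnorm_nonneg (P n a)).
  eapply Rle_trans; [apply Rabs_triang|]. rewrite Rabs_mult, (Rabs_right (sqnorm (P n a))) by lra.
  pose proof (Rabs_pos al). nra.
Qed.

End Filtration.

Lemma opseq_ext {H : Hilbert} (A B : opseq H) : (forall n x, A n x = B n x) -> A = B.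
Proof. intro E. apply functional_extensionality; intro n. apply functional_extensionality; auto. Qed.

Section SequenceAlgebra.
Context {H : Hilbert}.
Implicit Types x y z w v a b : H.
Variable P : nat -> op H.
Hypothesis HP : filtration P.

(** The paper's [F^P] carries the sup norm, so its elements are uniformly bounded; [inF]
    omits the bound, which is what makes products converge strongly. *)
Definition inFb (A : opseq H) := inF P A /\ exists M, 0 <= M /\ forall n, opnorm_le (A n) M.

Lemma entry_proj_r (A : opseq H) n x : (forall x, A n x = P n (A n (P n x))) -> A n (P n x) = A n x.
Proof. intro F. rewrite (F (P n x)), filt_idem, <- (F x) by auto. reflexivity. Qed.

Lemma entry_proj_l (A : opseq H) n x : (forall x, A n x = P n (A n (P n x))) -> P n (A n x) = A n x.
Proof. intro F. rewrite (F x), filt_idem by auto. reflexivity. Qed.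

Lemma inFb_zero : inFb (seq_zero H).
Proof.
  unfold seq_zero. split; [split; [|split]|].
  - intro n. split; [split; intros; [rewrite hadd_zero|rewrite hscal_0r]; reflexivity|].
    intro x. rewrite lin_zero by (apply filt_linear; auto). reflexivity.
  - intro x. exists hzero. apply hconv_const.
  - exists (seq_zero H). unfold seq_zero. split; [intros n x y; rewrite inner_0l, inner_0r; reflexivity|].
    intro x. exists hzero. apply hconv_const.
  - exists 0. split; [lra|]. intro n. apply opnorm_le_zero_op. lra.
Qed.

Lemma inFb_add A B : inFb A -> inFb B -> inFb (seq_add A B).
Proof.
  intros [[FA [SA [Sa [Ad Sas]]]] [MA [HMA BA]]] [[FB [SB [Sb [Bd Sbs]]]] [MB [HMB BB]]].
  unfold seq_add. split; [split; [|split]|].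
  - intro n. destruct (FA n) as [LA EA], (FB n) as [LB EB]. split; [split|].
    + intros x y. rewrite (proj1 LA), (proj1 LB). apply hadd_add_swap.
    + intros s x. rewrite (proj2 LA), (proj2 LB), hscal_addv. reflexivity.
    + intro x. rewrite (proj1 (filt_linear P HP n)), !entry_proj_r, !entry_proj_l by auto. reflexivity.
  - intro x. destruct (SA x) as [ya Ha], (SB x) as [yb Hb]. exists (hadd ya yb). apply (hconv_add _ _ _ _ Ha Hb).
  - exists (fun n y => hadd (Sa n y) (Sb n y)). split.
    + intros n x y. rewrite inner_add, inner_add_r, Ad, Bd. reflexivity.
    + intro x. destruct (Sas x) as [ya Ha], (Sbs x) as [yb Hb]. exists (hadd ya yb). apply (hconv_add _ _ _ _ Ha Hb).
  - exists (MA + MB). split; [lra|]. intros n x. eapply Rle_trans; [apply hnorm_triangle|].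
    pose proof (BA n x). pose proof (BB n x). lra.
Qed.

Lemma inFb_scal (c : C) A : inFb A -> inFb (seq_scal c A).
Proof.
  intros [[FA [SA [Sa [Ad Sas]]]] [MA [HMA BA]]].
  unfold seq_scal. split; [split; [|split]|].
  - intro n. destruct (FA n) as [LA EA]. split; [split|].
    + intros x y. rewrite (proj1 LA), hscal_addv. reflexivity.
    + intros s x. rewrite (proj2 LA), !hscal_mul. f_equal. destruct s, c; csimpl; f_equal; ring.
    + intro x. rewrite (proj2 (filt_linear P HP n)), !entry_proj_r, !entry_proj_l by auto. reflexivity.
  - intro x. destruct (SA x) as [ya Ha]. exists (hscal c ya). apply (hconv_scal c _ _ Ha).
  - exists (fun n y => hscal (Cconj c) (Sa n y)). split.
    + intros n x y. rewrite inner_scal, inner_scal_r, Ad, Cconj_involutive. reflexivity.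
    + intro x. destruct (Sas x) as [ya Ha]. exists (hscal (Cconj c) ya). apply (hconv_scal _ _ _ Ha).
  - exists (sqrt (Cnorm2 c) * MA). pose proof (sqrt_pos (Cnorm2 c)). split; [nra|].
    intros n x. rewrite hnorm_scal. pose proof (BA n x). nra.
Qed.

Lemma inFb_mul A B : inFb A -> inFb B -> inFb (seq_mul A B).
Proof.
  intros [[FA [SA [Sa [Ad Sas]]]] [MA [HMA BA]]] [[FB [SB [Sb [Bd Sbs]]]] [MB [HMB BB]]].
  assert (Sbp : forall n, is_linear (Sb n) /\ opnorm_le (Sb n) MB).
  { intro n. apply (adjoint_linear_bounded _ _ _ (Bd n) HMB). intro x. rewrite entry_proj_r by apply FB. apply BB. }
  unfold seq_mul. split; [split; [|split]|].
  - intro n. destruct (FA n) as [LA EA], (FB n) as [LB EB]. split; [split|].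
    + intros x y. rewrite (proj1 LB), (proj1 LA). reflexivity.
    + intros s x. rewrite (proj2 LB), (proj2 LA). reflexivity.
    + intro x. rewrite entry_proj_l, (entry_proj_r B n x) by auto. reflexivity.
  - intro x. destruct (SB x) as [yb Hb]. destruct (SA yb) as [ya Ha]. exists ya.
    apply (hconv_apply A MA _ yb); auto; [intro n; apply FA|].
    apply (hconv_ext _ _ _ (fun n => entry_proj_r A n yb (proj2 (FA n))) Ha).
  - exists (fun n y => Sb n (Sa n y)). split.
    + intros n x y. rewrite <- (entry_proj_r A n) by apply FA. rewrite Ad, Bd. reflexivity.
    + intro y. destruct (Sas y) as [ya Ha]. destruct (Sbs ya) as [yb Hb]. exists yb.
      apply (hconv_apply Sb MB _ ya); auto; apply Sbp.
  - exists (MA * MB). split; [nra|]. intros n x.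
    pose proof (BA n (B n x)). pose proof (BB n x). pose proof (hnorm_nonneg x). nra.
Qed.

Lemma inFb_of_approx (A : opseq H) : inF P A ->
  (forall eps, eps > 0 -> exists B, inFb B /\ forall n, opnorm_le (seq_sub A B n) eps) -> inFb A.
Proof.
  intros FA Happrox. split; auto. destruct (Happrox 1 ltac:(lra)) as [B [[_ [MB [HMB BB]]] HB]].
  exists (MB + 1). split; [lra|]. intros n x. rewrite <- (hadd_hsub (A n x) (B n x)).
  eapply Rle_trans; [apply hnorm_triangle|]. pose proof (BB n x). pose proof (HB n x). unfold seq_sub in *. lra.
Qed.

Definition compression (K : op H) : opseq H := fun n x => P n (K (P n x)).

Lemma compression_linear K n : is_linear K -> is_linear (compression K n).
Proof.
  intro LK. pose proof (filt_linear P HP n) as LP. unfold compression. split.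
  - intros x y. rewrite (proj1 LP), (proj1 LK), (proj1 LP). reflexivity.
  - intros s x. rewrite (proj2 LP), (proj2 LK), (proj2 LP). reflexivity.
Qed.

Lemma compression_hconv K (M : R) x : is_linear K -> 0 <= M -> opnorm_le K M ->
  hconv H (fun n => compression K n x) (K x).
Proof.
  intros LK HM BK. unfold compression.
  apply (hconv_apply P 1 _ (K x)); [lra|apply filt_linear; auto| | |apply (proj2 HP)].
  - intros n y. rewrite Rmult_1_l. apply orth_proj_contraction, filt_orth_proj; auto.
  - apply (hconv_apply (fun _ => K) M _ x); auto. apply (proj2 HP). apply hconv_const.
Qed.

Lemma inFb_compression K : compact K -> inFb (compression K).
Proof.
  intro CK. destruct (compact_bounded _ CK) as [M [HM BK]]. pose proof (proj1 CK) as LK.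
  destruct (adjoint_exists _ _ LK HM BK) as [Ks Adj].
  destruct (adjoint_linear_bounded _ _ _ Adj HM BK) as [LKs BKs].
  assert (Contr : forall n y, hn (P n y) <= hn y) by (intros; apply orth_proj_contraction, filt_orth_proj; auto).
  split; [split; [|split]|].
  - intro n. split; [apply compression_linear; auto|]. intro x. unfold compression. rewrite !filt_idem; auto.
  - intro x. exists (K x). apply (hconv_ext (fun n => compression K n x)); [|apply (compression_hconv K M); auto].
    intro n. unfold compression. rewrite filt_idem; auto.
  - exists (compression Ks). split; [|intro y; exists (Ks y); apply (compression_hconv Ks M); auto].
    intros n x y. unfold compression.
    pose proof (filt_orth_proj P HP n) as Pn.
    rewrite filt_idem, (orth_proj_adjoint _ Pn), Adj, (orth_proj_adjoint _ Pn); auto.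
  - exists M. split; auto. intros n x. unfold compression.
    eapply Rle_trans; [apply Contr|]. eapply Rle_trans; [apply BK|]. pose proof (Contr n x). nra.
Qed.

Definition seq_delta (k : nat) (B : opseq H) : opseq H :=
  fun n x => if Nat.eq_dec n k then B n x else hzero.

Lemma seq_delta_hconv k B (u : nat -> H) : hconv H (fun n => seq_delta k B n (u n)) hzero.
Proof.
  apply (hconv_eventually_zero _ (S k)). intros n Hn. unfold seq_delta. destruct (Nat.eq_dec n k); [lia|reflexivity].
Qed.

Lemma inF_seq_delta k B : inF P B -> inF P (seq_delta k B).
Proof.
  intros [FB [_ [Sb [Bd _]]]]. split; [|split]; [|intro x; exists hzero; apply seq_delta_hconv|].
  - intro n. unfold seq_delta. destruct (Nat.eq_dec n k); [apply FB|].
    split; [split; intros; [rewrite hadd_zero|rewrite hscal_0r]; reflexivity|].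
    intro x. rewrite lin_zero by (apply filt_linear; auto). reflexivity.
  - exists (seq_delta k Sb). split; [|intro x; exists hzero; apply seq_delta_hconv].
    intros n x y. unfold seq_delta. destruct (Nat.eq_dec n k); [apply Bd|]. rewrite inner_0l, inner_0r. reflexivity.
Qed.

Lemma seq_delta_add k A B : seq_delta k (seq_add A B) = seq_add (seq_delta k A) (seq_delta k B).
Proof.
  apply opseq_ext. intros n x. unfold seq_delta, seq_add.
  destruct (Nat.eq_dec n k); [reflexivity|]. symmetry. apply hadd_zero.
Qed.

End SequenceAlgebra.

Section OnlyIf.
Context {H : Hilbert}.
Variable P : nat -> op H.
Hypothesis HP : filtration P.

Lemma inF_filtration : inF P P.
Proof.
  split; [|split].
  - intro n. split; [apply filt_linear; auto|]. intro x. rewrite !filt_idem; auto.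
  - intro x. exists x. apply (hconv_ext (fun n => P n x)); [intro n; rewrite filt_idem; auto|apply (proj2 HP)].
  - exists P. split; [intros n x y; rewrite filt_idem; [apply orth_proj_adjoint, filt_orth_proj|]; auto|].
    intro x. exists x. apply (proj2 HP).
Qed.

Lemma seq_delta_filtration_inG k : inG P (seq_delta k P).
Proof.
  split; [apply inF_seq_delta, inF_filtration; auto|].
  intros eps He. exists (S k). intros n Hn. unfold seq_delta. destruct (Nat.eq_dec n k); [lia|].
  apply opnorm_le_zero_op. lra.
Qed.

Definition agree_at (n0 m0 : nat) (B : opseq H) : Prop := inFb P B /\ forall x, B n0 x = B m0 x.

Lemma agree_at_closed_subalg n0 m0 : closed_subalg P (agree_at n0 m0).
Proof.
  unfold agree_at. split; [|split; [|split; [|split; [|split]]]].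
  - intros A [[F _] _]. exact F.
  - split; [apply inFb_zero; auto|reflexivity].
  - intros A B [FA EA] [FB EB]. split; [apply inFb_add; auto|]. intro x. unfold seq_add. rewrite EA, EB. reflexivity.
  - intros c A [FA EA]. split; [apply inFb_scal; auto|]. intro x. unfold seq_scal. rewrite EA. reflexivity.
  - intros A B [FA EA] [FB EB]. split; [apply inFb_mul; auto|]. intro x. unfold seq_mul. rewrite EB, EA. reflexivity.
  - intros A FA Happrox. split.
    + apply inFb_of_approx; auto. intros eps He. destruct (Happrox eps He) as [B [[FB _] HB]]. eauto.
    + intro x. apply hsub_eq0, hnorm_small_eq0. intros eps He. pose proof (hnorm_nonneg x).
      set (del := eps / (2 * (hn x + 1))). assert (Hdel : del > 0) by (apply Rdiv_lt_0_compat; lra).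
      destruct (Happrox del Hdel) as [B [[_ EB] HB]].
      eapply Rle_trans; [apply (hnorm_hsub_triangle _ (B n0 x))|].
      pose proof (HB n0 x). pose proof (HB m0 x). unfold seq_sub in *.
      rewrite (hnorm_hsub_sym (B n0 x)), EB in *.
      assert (del * hn x <= eps / 2).
      { apply Rle_trans with (del * (hn x + 1)). nra. unfold del. right. field. lra. }
      lra.
Qed.

Lemma inJ_agree_at n0 m0 (A : opseq H) : (forall x, P n0 x = P m0 x) -> inJ P A -> forall x, A n0 x = A m0 x.
Proof.
  intros Eq HA. apply (HA _ (agree_at_closed_subalg n0 m0)).
  intros K CK. split; [apply (inFb_compression P HP K CK)|]. intro x. rewrite !Eq. reflexivity.
Qed.

Theorem injective_of_G_sub_J : (forall n, exists x : H, P n x <> hzero) ->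
  (forall A : opseq H, inG P A -> inJ P A) -> injective_filtration P.
Proof.
  intros Hnz HG n0 m0 Hnm. apply NNPP. intro Hne.
  assert (Eq : forall x, P n0 x = P m0 x) by (intro x; apply NNPP; intro; apply Hne; exists x; auto).
  destruct (Hnz n0) as [x Hx]. apply Hx.
  pose proof (inJ_agree_at n0 m0 _ Eq (HG _ (seq_delta_filtration_inG n0)) x) as Hagree.
  unfold seq_delta in Hagree. destruct (Nat.eq_dec n0 n0), (Nat.eq_dec m0 n0); congruence.
Qed.

End OnlyIf.

Section ClosedSubalgebra.
Context {H : Hilbert}.
Implicit Types x y z w v a b : H.
Variable P : nat -> op H.
Hypothesis HP : filtration P.

Lemma compression_rank_one w v n x : compression P (rank_one w v) n x = hscal (inner (P n x) v) (P n w).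
Proof. unfold compression, rank_one. rewrite (proj2 (filt_linear P HP n)). reflexivity. Qed.

Lemma compression_rank_one_opnorm w v n : opnorm_le (compression P (rank_one w v) n) (hn w * hn v).
Proof.
  intro x. rewrite compression_rank_one, hnorm_scal.
  pose proof (Cmod_inner_le (P n x) v). pose proof (sqrt_pos (Cnorm2 (inner (P n x) v))).
  pose proof (orth_proj_contraction _ (filt_orth_proj P HP n) x).
  pose proof (orth_proj_contraction _ (filt_orth_proj P HP n) w).
  pose proof (hnorm_nonneg (P n x)). pose proof (hnorm_nonneg (P n w)). pose proof (hnorm_nonneg v).
  apply Rle_trans with (hn (P n x) * hn v * hn w); [nra|].
  apply Rle_trans with (hn x * hn v * hn w); [|right; ring].
  apply Rmult_le_compat_r; [|apply Rmult_le_compat_r]; auto using hnorm_nonneg.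
Qed.

Variable Alg : opseq H -> Prop.
Hypothesis CS : closed_subalg P Alg.
Hypothesis Gen : forall K, compact K -> Alg (fun n x => P n (K (P n x))).

Lemma alg_zero : Alg (seq_zero H).
Proof. apply (proj1 (proj2 CS)). Qed.

Lemma alg_add A B : Alg A -> Alg B -> Alg (seq_add A B).
Proof. apply (proj1 (proj2 (proj2 CS))). Qed.

Lemma alg_scal (c : C) A : Alg A -> Alg (seq_scal c A).
Proof. apply (proj1 (proj2 (proj2 (proj2 CS)))). Qed.

Lemma alg_mul A B : Alg A -> Alg B -> Alg (seq_mul A B).
Proof. apply (proj1 (proj2 (proj2 (proj2 (proj2 CS))))). Qed.

Lemma alg_closed A : inF P A ->
  (forall eps, eps > 0 -> exists B, Alg B /\ forall n, opnorm_le (seq_sub A B n) eps) -> Alg A.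
Proof. apply (proj2 (proj2 (proj2 (proj2 (proj2 CS))))). Qed.

Lemma alg_compression K : compact K -> Alg (compression P K).
Proof. apply Gen. Qed.

Definition seq_weight (psi : nat -> R) (B : opseq H) : opseq H := fun n x => hscal (psi n, 0) (B n x).

Definition is_multiplier (psi : nat -> R) : Prop :=
  forall w v, Alg (seq_weight psi (compression P (rank_one w v))).

Lemma is_multiplier_one : is_multiplier (fun _ => 1).
Proof.
  intros w v. replace (seq_weight _ _) with (compression P (rank_one w v)); [apply alg_compression, rank_one_compact|].
  apply opseq_ext. intros n x. unfold seq_weight. symmetry. apply hscal_one.
Qed.

Lemma is_multiplier_mul_affine psi (al be : R) a : is_multiplier psi ->
  is_multiplier (fun n => psi n * (al * sqnorm (P n a) + be)).
Proof.
  intros Hpsi w v.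
  pose proof (alg_add _ _ (alg_scal (al, 0) _ (alg_mul _ _ (Hpsi w a) (alg_compression _ (rank_one_compact a v))))
                        (alg_scal (be, 0) _ (Hpsi w v))) as HS.
  match type of HS with Alg ?B => replace (seq_weight _ _) with B; auto end.
  apply opseq_ext. intros n x. unfold seq_add, seq_scal, seq_mul, seq_weight.
  rewrite !compression_rank_one, (proj2 (filt_linear P HP n)), filt_idem, inner_scal,
    (orth_proj_inner_self _ (filt_orth_proj P HP n)), !hscal_mul, <- hscal_adds by auto.
  f_equal. destruct (inner (P n x) v). csimpl. f_equal; ring.
Qed.

Lemma is_multiplier_mul_affine_pow psi (al be : R) a p : is_multiplier psi ->
  is_multiplier (fun n => psi n * (al * sqnorm (P n a) + be) ^ p).
Proof.
  intro Hpsi. induction p as [|p IH].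
  - replace (fun n => psi n * _ ^ 0) with psi; auto. apply functional_extensionality. intro n. simpl. ring.
  - replace (fun n => psi n * _ ^ S p) with (fun n => psi n * (al * sqnorm (P n a) + be) ^ p * (al * sqnorm (P n a) + be)).
    + apply is_multiplier_mul_affine, IH.
    + apply functional_extensionality. intro n. simpl. ring.
Qed.

(** Multiplying by [(|P_n a|^2 - |P_m a|^2) / (|P_k a|^2 - |P_m a|^2)], with [a] separating
    [P_m] from [P_k], kills index [m] and keeps index [k]. *)
Lemma is_multiplier_vanishing_below k M : injective_filtration P ->
  exists psi (c : R), is_multiplier psi /\ psi k = 1 /\
    (forall n, (n < M)%nat -> n <> k -> psi n = 0) /\ forall n, Rabs (psi n) <= c.
Proof.
  intro Inj. induction M as [|M [psi [c [Hpsi [Hk [Hzero Hb]]]]]].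
  { exists (fun _ => 1), 1. split; [apply is_multiplier_one|]. split; [reflexivity|].
    split; [intros; lia|]. intro. rewrite Rabs_R1. lra. }
  destruct (Nat.eq_dec M k) as [->|HMk].
  { exists psi, c. repeat split; auto. intros n Hn Hnk. apply Hzero; lia. }
  destruct (filt_separate P HP k M Inj HMk) as [a Ha].
  set (d := sqnorm (P k a) - sqnorm (P M a)). assert (Hd : d <> 0) by (unfold d; lra).
  set (al := / d). set (be := - sqnorm (P M a) / d).
  exists (fun n => psi n * (al * sqnorm (P n a) + be)), (c * (Rabs al * sqnorm a + Rabs be)).
  split; [apply is_multiplier_mul_affine; auto|]. split; [|split].
  - rewrite Hk. unfold al, be, d. field. auto.
  - intros n Hn Hnk. destruct (Nat.eq_dec n M) as [->|HnM].
    + unfold al, be. field. auto.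
    + rewrite Hzero by lia. ring.
  - intro n. rewrite Rabs_mult. apply Rmult_le_compat; auto using Rabs_pos, (affine_sqnorm_bound P HP).
Qed.

Lemma is_multiplier_approx_delta k : injective_filtration P -> forall eps, eps > 0 ->
  exists psi, is_multiplier psi /\ psi k = 1 /\ forall n, n <> k -> Rabs (psi n) <= eps.
Proof.
  intros Inj eps He.
  destruct (filt_affine_decay P HP k Inj) as [al [be [a [M [Htk Hdecay]]]]].
  destruct (is_multiplier_vanishing_below k M Inj) as [psi [c [Hpsi [Hk [Hzero Hb]]]]].
  assert (Hc : 0 <= c) by (eapply Rle_trans; [apply Rabs_pos|apply (Hb 0%nat)]).
  destruct (pow_lt_1_zero (1/2) ltac:(rewrite Rabs_right; lra) (eps / (c + 1))) as [p Hp].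
  { apply Rdiv_lt_0_compat; lra. }
  specialize (Hp p (le_n p)). rewrite Rabs_right in Hp by (apply Rle_ge, pow_le; lra).
  exists (fun n => psi n * (al * sqnorm (P n a) + be) ^ p).
  split; [apply is_multiplier_mul_affine_pow; auto|]. split; [rewrite Hk, Htk, pow1; ring|].
  intros n Hnk. rewrite Rabs_mult. destruct (lt_dec n M) as [Hlt|Hge].
  - rewrite Hzero, Rabs_R0 by auto. pose proof (Rabs_pos ((al * sqnorm (P n a) + be) ^ p)). lra.
  - assert (T : Rabs ((al * sqnorm (P n a) + be) ^ p) <= (1/2) ^ p).
    { rewrite <- RPow_abs. apply pow_incr. split; [apply Rabs_pos|apply Hdecay; lia]. }
    pose proof (Hb n). pose proof (Rabs_pos (psi n)). pose proof (pow_le (1/2) p ltac:(lra)).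
    apply Rle_trans with (c * (1/2)^p). apply Rmult_le_compat; auto using Rabs_pos.
    apply Rle_trans with ((c + 1) * (eps / (c + 1))). nra. right. field. lra.
Qed.



Lemma seq_delta_rank_one_in_alg k w v : injective_filtration P ->
  Alg (seq_delta k (compression P (rank_one w v))).
Proof.
  intro Inj. apply alg_closed.
  - apply inF_seq_delta; auto. apply (inFb_compression P HP), rank_one_compact.
  - intros eps He. pose proof (hnorm_nonneg w). pose proof (hnorm_nonneg v).
    set (c := hn w * hn v + 1). assert (Hc : 0 < c) by (unfold c; nra).
    destruct (is_multiplier_approx_delta k Inj (eps / c)) as [psi [Hpsi [Hk Hsmall]]].
    { apply Rdiv_lt_0_compat; lra. }
    exists (seq_weight psi (compression P (rank_one w v))). split; [apply Hpsi|].
    intros n x. pose proof (hnorm_nonneg x). unfold seq_sub, seq_delta, seq_weight.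
    destruct (Nat.eq_dec n k) as [->|Hnk].
    + rewrite Hk. change (1, 0) with C1. rewrite hscal_one, hsub_same, hnorm_zero. nra.
    + rewrite hnorm_hsub_sym, hsub_0r, hnorm_scal_real.
      pose proof (compression_rank_one_opnorm w v n x). pose proof (hnorm_nonneg (compression P (rank_one w v) n x)).
      apply Rle_trans with (eps / c * (c * hn x)).
      * apply Rmult_le_compat; [apply Rabs_pos|auto|auto|unfold c; nra].
      * right. field. lra.
Qed.

Lemma seq_delta_rank_one_sum_in_alg k qs : injective_filtration P ->
  Alg (seq_delta k (compression P (rank_one_sum qs))).
Proof.
  intro Inj. induction qs as [|q qs IH].
  - replace (seq_delta _ _) with (seq_zero H); [apply alg_zero|].
    apply opseq_ext. intros n x. unfold seq_zero, seq_delta, compression, rank_one_sum. simpl.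
    destruct (Nat.eq_dec n k); [|reflexivity]. symmetry. apply lin_zero, filt_linear; auto.
  - replace (seq_delta _ _) with (seq_add (seq_delta k (compression P (rank_one (fst q) (snd q))))
                                         (seq_delta k (compression P (rank_one_sum qs)))).
    + apply alg_add; auto. apply seq_delta_rank_one_in_alg; auto.
    + rewrite <- seq_delta_add. f_equal. apply opseq_ext. intros n x.
      unfold seq_add, compression, rank_one_sum. simpl. rewrite (proj1 (filt_linear P HP n)). reflexivity.
Qed.

(** Each entry [A_k = A_k P_k] has finite rank, hence is a finite sum of rank-one operators. *)
Lemma seq_delta_in_alg k A : injective_filtration P -> inF P A -> Alg (seq_delta k A).
Proof.
  intros Inj [FA _]. destruct (filt_rank_one_sum P HP k) as [ps Hps]. destruct (FA k) as [LA EA].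
  set (qs := map (fun p => (A k (fst p), snd p)) ps).
  replace (seq_delta k A) with (seq_delta k (compression P (rank_one_sum qs)));
    [apply seq_delta_rank_one_sum_in_alg; auto|].
  apply opseq_ext. intros n x. unfold seq_delta, compression. destruct (Nat.eq_dec n k) as [->|]; [|reflexivity].
  unfold qs. rewrite <- lin_rank_one_sum, <- Hps, filt_idem, <- EA by auto. reflexivity.
Qed.

Definition truncation (N : nat) (A : opseq H) : opseq H := fun n x => if lt_dec n N then A n x else hzero.

Lemma truncation_in_alg N A : injective_filtration P -> inF P A -> Alg (truncation N A).
Proof.
  intros Inj FA. induction N as [|N IH].
  - replace (truncation 0 A) with (seq_zero H); [apply alg_zero|].
    apply opseq_ext. intros n x. unfold truncation. destruct (lt_dec n 0); [lia|reflexivity].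
  - replace (truncation (S N) A) with (seq_add (truncation N A) (seq_delta N A)).
    + apply alg_add; auto. apply seq_delta_in_alg; auto.
    + apply opseq_ext. intros n x. unfold truncation, seq_add, seq_delta.
      destruct (lt_dec n N), (Nat.eq_dec n N), (lt_dec n (S N)); try lia; subst; auto using hadd_zero, hadd_0l.
Qed.

Lemma inG_in_alg A : injective_filtration P -> inG P A -> Alg A.
Proof.
  intros Inj [FA GA]. apply alg_closed; auto.
  intros eps He. destruct (GA eps He) as [N HN]. exists (truncation N A). split; [apply truncation_in_alg; auto|].
  intros n x. unfold seq_sub, truncation. destruct (lt_dec n N).
  - rewrite hsub_same, hnorm_zero. pose proof (hnorm_nonneg x). nra.
  - rewrite hsub_0r. apply HN. lia.
Qed.

End ClosedSubalgebra.

Theorem G_sub_J_of_injective {H : Hilbert} (P : nat -> op H) : filtration P -> injective_filtration P ->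
  forall A : opseq H, inG P A -> inJ P A.
Proof. intros HP Inj A HA Alg CS Gen. exact (inG_in_alg P HP Alg CS Gen A Inj HA). Qed.

Theorem proposition4p1 (H : Hilbert) (P : nat -> op H) :
  filtration P ->
  (forall n, exists x : H, P n x <> hzero) ->
  ((forall A : opseq H, inG P A -> inJ P A) <-> injective_filtration P).
Proof.
  intros HP Hnz. split.
  - apply (injective_of_G_sub_J P HP Hnz).
  - apply (G_sub_J_of_injective P HP).
Qed.
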